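(* Let $n\ge2$ and let $\psi:\mathbb D\to\widetilde\Gamma_n$ be an analytic map such that $\psi(\lambda_0)\in\widetilde{\mathbb G}_n$ for some $\lambda_0\in\mathbb D$. Then $\psi(\mathbb D)\subset\widetilde{\mathbb G}_n$.
   Context: $\mathbb D$ is the open unit disc. $\widetilde{\mathbb G}_n=\{(y_1,\dots,y_{n-1},q)\in\mathbb C^n: q\in\mathbb D,\ y_j=\beta_j+\bar\beta_{n-j}q$ for some $\beta_j\in\mathbb C$ with $|\beta_j|+|\beta_{n-j}|<\binom{n}{j}$, $j=1,\dots,n-1\}$; $\widetilde\Gamma_n$ is its closure. *)

From Stdlib Require Import Reals.
From Coquelicot Require Import Coquelicot.
Open Scope R_scope.

(* A point of C^n is represented as (y, q) with y : nat -> C; only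
   the coordinates y 1, ..., y (n-1) are relevant, q is the last one. *)

Definition in_disc (z : C) : Prop := Cmod z < 1.

Definition in_Gt (n : nat) (y : nat -> C) (q : C) : Prop :=
  in_disc q /\
  exists beta : nat -> C,
    forall j : nat, (1 <= j <= n - 1)%nat ->
      y j = (beta j + Cconj (beta (n - j)%nat) * q)%C /\
      Cmod (beta j) + Cmod (beta (n - j)%nat) < Binomial.C n j.

Definition in_Gammat (n : nat) (y : nat -> C) (q : C) : Prop :=
  forall eps : R, 0 < eps ->
    exists (y' : nat -> C) (q' : C),
      in_Gt n y' q' /\ Cmod (q - q') < eps /\
      forall j : nat, (1 <= j <= n - 1)%nat -> Cmod (y j - y' j) < eps.

Definition holo_on_disc (f : C -> C) : Prop :=
  forall z : C, in_disc z -> ex_derive (K := C_AbsRing) (V := C_NormedModule) f z.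

(** The proof rests on the maximum modulus principle for holomorphic self-maps
    of the closed disc: if [|f| <= 1] on the open disc and [|f(l0)| < 1] at one
    point, then [|f| < 1] everywhere.  It is applied twice.  First to [psi_q],
    whose modulus is at most [1] since [psi] lands in the closure.  Then, for
    each [j] and each unimodular [om], [zz], to the Moebius-type function
    [(2 c zz om q - w) / (2 c - zz w)] with [w = y_j + om y_(n-j)] and
    [c = binom(n, j)]: its modulus is [<= 1] exactly when
    [Re (zz (A + om B)) <= c (1 - |q|^2)], where [A = y_j - conj(y_(n-j)) q]
    and [B = y_(n-j) - conj(y_j) q].  Choosing [om], [zz] at the target point
    so that this real part equals [|A| + |B|] turns the strict inequality at
    [l0] into [|A| + |B| < c (1 - |q|^2)] everywhere, and that strict pair
    inequality characterises membership in [Gt_n] via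
    [beta_j = A / (1 - |q|^2)].

    The maximum modulus principle itself comes from Goursat's lemma for
    triangles in a closed convex set: it gives a primitive of the difference
    quotient [(f z - f z1) / (z - z1)] near [z1], hence the mean value property
    on small circles, hence [|f| = 1] is an open condition; a continuity
    argument along the segment from [l0] finishes the proof. *)

From Stdlib Require Import Reals Lra Psatz Lia Classical FunctionalExtensionality.
From Coquelicot Require Import Coquelicot.
Open Scope R_scope.

Lemma Cmod_le_Rabs_fst_snd (z : C) : Cmod z <= Rabs (fst z) + Rabs (snd z).
Proof.
  unfold Cmod. rewrite <- (Rabs_pos_eq (Rabs (fst z) + Rabs (snd z))) by
    (generalize (Rabs_pos (fst z)) (Rabs_pos (snd z)); lra).
  rewrite <- sqrt_Rsqr_abs. apply sqrt_le_1_alt.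
  unfold Rsqr. rewrite <- (pow2_abs (fst z)), <- (pow2_abs (snd z)).
  generalize (Rabs_pos (fst z)) (Rabs_pos (snd z)); nra.
Qed.

Lemma Rabs_snd_le_Cmod (z : C) : Rabs (snd z) <= Cmod z.
Proof.
  unfold Cmod. rewrite <- sqrt_Rsqr_abs. apply sqrt_le_1_alt.
  unfold Rsqr. nra.
Qed.

Lemma fst_le_Cmod (z : C) : fst z <= Cmod z.
Proof. generalize (re_le_Cmod z). unfold Re, Rabs; destruct Rcase_abs; lra. Qed.

Lemma Cmod_minus_sym (a b : C) : Cmod (a - b) = Cmod (b - a).
Proof. replace (a - b)%C with (- (b - a))%C by ring. apply Cmod_opp. Qed.

Lemma Cmod_RtoC_mult (r : R) (z : C) : Cmod (RtoC r * z) = Rabs r * Cmod z.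
Proof. rewrite Cmod_mult, Cmod_R. reflexivity. Qed.

Lemma Cmod_triangle3 (a b c : C) : Cmod (a + b + c) <= Cmod a + Cmod b + Cmod c.
Proof. eapply Rle_trans. apply Cmod_triangle. generalize (Cmod_triangle a b). lra. Qed.

Lemma Cmod_minus_le (a b : C) : Cmod (a - b) <= Cmod a + Cmod b.
Proof. unfold Cminus. eapply Rle_trans. apply Cmod_triangle. rewrite Cmod_opp. lra. Qed.

Lemma Cmod_dist_triangle (a b c : C) : Cmod (a - c) <= Cmod (a - b) + Cmod (b - c).
Proof. replace (a - c)%C with ((a - b) + (b - c))%C by ring. apply Cmod_triangle. Qed.

Lemma Cmod_reverse_triangle (a b : C) : Cmod a - Cmod b <= Cmod (a - b).
Proof.
  generalize (Cmod_triangle (a - b) b). replace (a - b + b)%C with a by ring. lra.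
Qed.

Lemma Cmod_minus_self (z : C) : Cmod (z - z) = 0.
Proof. replace (z - z)%C with (RtoC 0) by ring. apply Cmod_0. Qed.

Lemma Cminus_neq_0 (a b : C) : a <> b -> (a - b)%C <> 0%C.
Proof. intros Hab E. apply Hab. replace a with (a - b + b)%C by ring. rewrite E. ring. Qed.

Lemma Rabs_le_inv (x y : R) : Rabs x <= y -> - y <= x <= y.
Proof. unfold Rabs. destruct Rcase_abs; lra. Qed.

Lemma Rmult_Rdiv_lt (x y M : R) : 0 < M -> x < y / M -> M * x < y.
Proof. intros HM H. apply Rmult_lt_compat_l with (r := M) in H; auto. field_simplify in H; lra. Qed.

Lemma Rdiv_lt_1_iff (a b : R) : 0 < b -> a / b < 1 <-> a < b.
Proof.
  intros Hb. split; intro H.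
  - apply Rmult_lt_compat_r with (r := b) in H; auto. field_simplify in H; lra.
  - apply Rmult_lt_reg_r with b; auto. field_simplify; lra.
Qed.

Lemma Rdiv_le_1 (a b : R) : 0 < b -> a <= b -> a / b <= 1.
Proof. intros Hb H. apply Rmult_le_reg_r with b; auto. field_simplify; lra. Qed.

(** * Complex differentiability in epsilon-delta form *)

Definition C_continuous_at (f : C -> C) (z : C) : Prop :=
  forall eps, 0 < eps -> exists del, 0 < del /\
    forall w, Cmod (w - z) < del -> Cmod (f w - f z) < eps.

Definition C_derivable_pt_lim (f : C -> C) (z d : C) : Prop :=
  forall eps, 0 < eps -> exists del, 0 < del /\
    forall w, Cmod (w - z) < del -> Cmod (f w - f z - d * (w - z)) <= eps * Cmod (w - z).

Definition C_derivable_at (f : C -> C) (z : C) : Prop := exists d, C_derivable_pt_lim f z d.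

Lemma is_derive_C_derivable_pt_lim (f : C -> C) z l :
  is_derive (K := C_AbsRing) (V := C_NormedModule) f z l -> C_derivable_pt_lim f z l.
Proof.
  intros [_ H] eps Heps.
  assert (Hl : is_filter_lim (locally z) z) by (intros P HP; exact HP).
  destruct (H z Hl (mkposreal eps Heps)) as [[del Hdel] Hd]. simpl in Hd.
  exists (del / 2). split. lra.
  intros w Hw.
  assert (Hb : ball z del w) by (change (Cmod (minus w z) < del); apply (Rlt_trans _ _ _ Hw); lra).
  replace (f w - f z - l * (w - z))%C with (f w - f z - (w - z) * l)%C by ring.
  exact (Hd w Hb).
Qed.

Lemma holo_on_disc_C_derivable_at f : holo_on_disc f -> forall z, in_disc z -> C_derivable_at f z.
Proof. intros H z Hz. destruct (H z Hz) as [l Hl]. exists l. now apply is_derive_C_derivable_pt_lim. Qed.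

Lemma C_derivable_pt_lim_lipschitz f z d : C_derivable_pt_lim f z d -> exists del, 0 < del /\
  forall w, Cmod (w - z) < del -> Cmod (f w - f z) <= (Cmod d + 1) * Cmod (w - z).
Proof.
  intros H. destruct (H 1 Rlt_0_1) as [del [Hd Hw]]. exists del; split; auto.
  intros w Hw'. specialize (Hw w Hw').
  replace (f w - f z)%C with ((f w - f z - d * (w - z)) + d * (w - z))%C by ring.
  eapply Rle_trans. apply Cmod_triangle. rewrite Cmod_mult. lra.
Qed.

Lemma C_derivable_pt_lim_continuous f z d : C_derivable_pt_lim f z d -> C_continuous_at f z.
Proof.
  intros H eps Heps.
  destruct (C_derivable_pt_lim_lipschitz f z d H) as [del [Hd Hw]].
  assert (Hp : 0 < Cmod d + 1) by (generalize (Cmod_ge_0 d); lra).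
  exists (Rmin del (eps / (Cmod d + 1))). split.
  { apply Rmin_pos; auto. apply Rdiv_lt_0_compat; auto. }
  intros w Hw'. eapply Rle_lt_trans. apply Hw. eapply Rlt_le_trans; [apply Hw' | apply Rmin_l].
  apply Rmult_Rdiv_lt; auto. eapply Rlt_le_trans; [apply Hw' | apply Rmin_r].
Qed.

Lemma C_derivable_at_continuous f z : C_derivable_at f z -> C_continuous_at f z.
Proof. intros [d Hd]. exact (C_derivable_pt_lim_continuous f z d Hd). Qed.

Lemma C_derivable_pt_lim_local f g z d del :
  0 < del -> (forall w, Cmod (w - z) < del -> f w = g w) ->
  C_derivable_pt_lim g z d -> C_derivable_pt_lim f z d.
Proof.
  intros Hdel Heq H eps Heps. destruct (H eps Heps) as [d1 [Hd1 Hw]].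
  exists (Rmin del d1). split. apply Rmin_pos; auto.
  intros w Hw'. rewrite (Heq w), (Heq z).
  - apply Hw. eapply Rlt_le_trans; [apply Hw' | apply Rmin_r].
  - rewrite Cmod_minus_self. auto.
  - eapply Rlt_le_trans; [apply Hw' | apply Rmin_l].
Qed.

Lemma C_derivable_pt_lim_const c z : C_derivable_pt_lim (fun _ => c) z 0.
Proof.
  intros eps Heps. exists 1. split. lra. intros w _.
  replace (c - c - 0 * (w - z))%C with (RtoC 0) by ring. rewrite Cmod_0.
  generalize (Cmod_ge_0 (w - z)). nra.
Qed.

Lemma C_derivable_pt_lim_affine al be z : C_derivable_pt_lim (fun w => al + be * w)%C z be.
Proof.
  intros eps Heps. exists 1. split. lra. intros w _.
  replace (al + be * w - (al + be * z) - be * (w - z))%C with (RtoC 0) by ring. rewrite Cmod_0.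
  generalize (Cmod_ge_0 (w - z)). nra.
Qed.

Lemma C_continuous_at_affine al be z : C_continuous_at (fun w => al + be * w)%C z.
Proof. exact (C_derivable_pt_lim_continuous _ _ _ (C_derivable_pt_lim_affine al be z)). Qed.

Lemma C_derivable_pt_lim_plus f g z df dg :
  C_derivable_pt_lim f z df -> C_derivable_pt_lim g z dg ->
  C_derivable_pt_lim (fun w => f w + g w)%C z (df + dg).
Proof.
  intros Hf Hg eps Heps.
  destruct (Hf (eps / 2)) as [d1 [Hd1 H1]]. lra.
  destruct (Hg (eps / 2)) as [d2 [Hd2 H2]]. lra.
  exists (Rmin d1 d2). split. apply Rmin_pos; auto.
  intros w Hw.
  specialize (H1 w (Rlt_le_trans _ _ _ Hw (Rmin_l _ _))).
  specialize (H2 w (Rlt_le_trans _ _ _ Hw (Rmin_r _ _))).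
  replace (f w + g w - (f z + g z) - (df + dg) * (w - z))%C with
    ((f w - f z - df * (w - z)) + (g w - g z - dg * (w - z)))%C by ring.
  eapply Rle_trans. apply Cmod_triangle. lra.
Qed.

Lemma C_derivable_pt_lim_mult f g z df dg :
  C_derivable_pt_lim f z df -> C_derivable_pt_lim g z dg ->
  C_derivable_pt_lim (fun w => f w * g w)%C z (df * g z + f z * dg).
Proof.
  intros Hf Hg eps Heps.
  set (M := Cmod (g z) + Cmod (f z) + Cmod df + 1).
  assert (HM : 0 < M) by (unfold M; generalize (Cmod_ge_0 (g z)) (Cmod_ge_0 (f z)) (Cmod_ge_0 df); lra).
  set (e1 := Rmin 1 (eps / M)).
  assert (He1 : 0 < e1) by (apply Rmin_pos; [lra | apply Rdiv_lt_0_compat; auto]).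
  assert (He1' : e1 <= 1) by apply Rmin_l.
  assert (He1M : e1 * M <= eps).
  { apply Rle_trans with (eps / M * M). apply Rmult_le_compat_r; [lra | apply Rmin_r].
    right. field. lra. }
  destruct (Hf e1 He1) as [d1 [Hd1 H1]].
  destruct (Hg e1 He1) as [d2 [Hd2 H2]].
  destruct (C_derivable_pt_lim_continuous g z dg Hg e1 He1) as [d3 [Hd3 H3]].
  exists (Rmin d1 (Rmin d2 d3)). split. repeat apply Rmin_pos; auto.
  intros w Hw.
  specialize (H1 w (Rlt_le_trans _ _ _ Hw (Rmin_l _ _))).
  specialize (H2 w (Rlt_le_trans _ _ _ Hw (Rle_trans _ _ _ (Rmin_r _ _) (Rmin_l _ _)))).
  specialize (H3 w (Rlt_le_trans _ _ _ Hw (Rle_trans _ _ _ (Rmin_r _ _) (Rmin_r _ _)))).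
  set (ef := (f w - f z - df * (w - z))%C) in *.
  set (eg := (g w - g z - dg * (w - z))%C) in *.
  set (h := Cmod (w - z)) in *.
  replace (f w * g w - f z * g z - (df * g z + f z * dg) * (w - z))%C with
    (ef * g z + f z * eg + (ef + df * (w - z)) * (g w - g z))%C by (unfold ef, eg; ring).
  assert (0 <= h) by apply Cmod_ge_0.
  assert (Hfd : Cmod (ef + df * (w - z)) <= (1 + Cmod df) * h).
  { eapply Rle_trans. apply Cmod_triangle. rewrite Cmod_mult. fold h.
    generalize (Cmod_ge_0 df). nra. }
  eapply Rle_trans. apply Cmod_triangle3. rewrite !Cmod_mult.
  assert (Cmod ef * Cmod (g z) <= e1 * h * Cmod (g z)) by (apply Rmult_le_compat_r; auto; apply Cmod_ge_0).
  assert (Cmod (f z) * Cmod eg <= Cmod (f z) * (e1 * h)) by (apply Rmult_le_compat_l; auto; apply Cmod_ge_0).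
  assert (Cmod (ef + df * (w - z)) * Cmod (g w - g z) <= (1 + Cmod df) * h * e1).
  { apply Rmult_le_compat; auto using Cmod_ge_0. lra. }
  unfold M in He1M. nra.
Qed.

Lemma C_derivable_pt_lim_scal c f z d :
  C_derivable_pt_lim f z d -> C_derivable_pt_lim (fun w => c * f w)%C z (c * d).
Proof.
  intros H. replace (c * d)%C with (0 * f z + c * d)%C by ring.
  exact (C_derivable_pt_lim_mult (fun _ => c) f z 0 d (C_derivable_pt_lim_const c z) H).
Qed.

Lemma C_derivable_pt_lim_comp f G z d1 d2 :
  C_derivable_pt_lim f z d1 -> C_derivable_pt_lim G (f z) d2 ->
  C_derivable_pt_lim (fun w => G (f w)) z (d2 * d1).
Proof.
  intros Hf HG eps Heps.
  set (M := Cmod d1 + 1 + Cmod d2).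
  assert (HM : 0 < M) by (unfold M; generalize (Cmod_ge_0 d1) (Cmod_ge_0 d2); lra).
  assert (Hp : 0 < Cmod d1 + 1) by (generalize (Cmod_ge_0 d1); lra).
  destruct (C_derivable_pt_lim_lipschitz f z d1 Hf) as [d0 [Hd0 H0]].
  destruct (HG (eps / M)) as [dG [HdG H2]]. apply Rdiv_lt_0_compat; auto.
  destruct (Hf (eps / M)) as [d3 [Hd3 H3]]. apply Rdiv_lt_0_compat; auto.
  exists (Rmin d0 (Rmin d3 (dG / (Cmod d1 + 1)))). split.
  { repeat apply Rmin_pos; auto. apply Rdiv_lt_0_compat; auto. }
  intros w Hw.
  specialize (H0 w (Rlt_le_trans _ _ _ Hw (Rmin_l _ _))).
  specialize (H3 w (Rlt_le_trans _ _ _ Hw (Rle_trans _ _ _ (Rmin_r _ _) (Rmin_l _ _)))).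
  assert (HwG := Rlt_le_trans _ _ _ Hw (Rle_trans _ _ _ (Rmin_r _ _) (Rmin_r _ _))).
  assert (HfG : Cmod (f w - f z) < dG) by (eapply Rle_lt_trans; [apply H0 | apply Rmult_Rdiv_lt; auto]).
  specialize (H2 (f w) HfG).
  replace (G (f w) - G (f z) - d2 * d1 * (w - z))%C with
    ((G (f w) - G (f z) - d2 * (f w - f z)) + d2 * (f w - f z - d1 * (w - z)))%C by ring.
  eapply Rle_trans. apply Cmod_triangle. rewrite Cmod_mult.
  assert (Hx : eps / M * Cmod (f w - f z) <= eps / M * ((Cmod d1 + 1) * Cmod (w - z))).
  { apply Rmult_le_compat_l; auto. left; apply Rdiv_lt_0_compat; auto. }
  assert (Hy : Cmod d2 * Cmod (f w - f z - d1 * (w - z)) <= Cmod d2 * (eps / M * Cmod (w - z))).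
  { apply Rmult_le_compat_l; auto. apply Cmod_ge_0. }
  replace (eps * Cmod (w - z)) with
    (eps / M * ((Cmod d1 + 1) * Cmod (w - z)) + Cmod d2 * (eps / M * Cmod (w - z)))
    by (unfold M in HM |- *; field; lra).
  lra.
Qed.

Lemma C_derivable_pt_lim_Cinv (w0 : C) : w0 <> 0%C -> C_derivable_pt_lim Cinv w0 (- / (w0 * w0))%C.
Proof.
  intros Hw0 eps Heps.
  assert (Hm : 0 < Cmod w0) by (apply Cmod_gt_0; exact Hw0).
  exists (Rmin (Cmod w0 / 2) (eps * Cmod w0 ^ 3 / 2)). split.
  { apply Rmin_pos. lra. apply Rdiv_lt_0_compat. apply Rmult_lt_0_compat; auto. apply pow_lt; auto. lra. }
  intros w Hw.
  assert (Hw1 := Rlt_le_trans _ _ _ Hw (Rmin_l _ _)).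
  assert (Hw2 := Rlt_le_trans _ _ _ Hw (Rmin_r _ _)).
  assert (Hmw : Cmod w0 / 2 < Cmod w) by (generalize (Cmod_reverse_triangle w0 w); rewrite Cmod_minus_sym; lra).
  assert (Hwn : w <> 0%C) by (apply Cmod_gt_0; lra).
  replace (/ w - / w0 - - / (w0 * w0) * (w - w0))%C with
    ((w - w0) * (w - w0) / (w * (w0 * w0)))%C by (field; split; auto).
  rewrite Cmod_div by (repeat apply Cmult_neq_0; auto). rewrite !Cmod_mult.
  set (h := Cmod (w - w0)) in *. set (m := Cmod w0) in *.
  assert (0 <= h) by apply Cmod_ge_0.
  apply Rle_trans with (h * h / (m / 2 * (m * m))).
  { unfold Rdiv. apply Rmult_le_compat_l. nra.
    apply Rinv_le_contravar. nra. apply Rmult_le_compat_r; nra. }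
  apply Rle_trans with (h * (eps * m ^ 3 / 2) / (m / 2 * (m * m))).
  { unfold Rdiv. apply Rmult_le_compat_r. left; apply Rinv_0_lt_compat; nra.
    apply Rmult_le_compat_l; nra. }
  right. field. lra.
Qed.

Lemma C_derivable_at_const c z : C_derivable_at (fun _ => c) z.
Proof. eexists. apply C_derivable_pt_lim_const. Qed.

Lemma C_derivable_at_id z : C_derivable_at (fun w => w) z.
Proof.
  exists 1%C. apply (C_derivable_pt_lim_local _ (fun w => 0 + 1 * w)%C z 1 1); [lra | intros; ring |].
  apply C_derivable_pt_lim_affine.
Qed.

Lemma C_derivable_at_plus f g z : C_derivable_at f z -> C_derivable_at g z ->
  C_derivable_at (fun w => f w + g w)%C z.
Proof. intros [a Ha] [b Hb]. eexists. apply C_derivable_pt_lim_plus; eauto. Qed.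

Lemma C_derivable_at_mult f g z : C_derivable_at f z -> C_derivable_at g z ->
  C_derivable_at (fun w => f w * g w)%C z.
Proof. intros [a Ha] [b Hb]. eexists. apply C_derivable_pt_lim_mult; eauto. Qed.

Lemma C_derivable_at_minus f g z : C_derivable_at f z -> C_derivable_at g z ->
  C_derivable_at (fun w => f w - g w)%C z.
Proof.
  intros Hf Hg. replace (fun w => f w - g w)%C with (fun w => f w + RtoC (-1) * g w)%C
    by (extensionality w; apply injective_projections; simpl; ring).
  apply C_derivable_at_plus; auto. apply C_derivable_at_mult; auto. apply C_derivable_at_const.
Qed.

Lemma C_derivable_at_Cinv g z : C_derivable_at g z -> g z <> 0%C ->
  C_derivable_at (fun w => Cinv (g w)) z.
Proof.
  intros [a Ha] Hz. eexists. apply (C_derivable_pt_lim_comp g Cinv z); eauto.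
  apply C_derivable_pt_lim_Cinv; auto.
Qed.

Lemma C_continuous_at_scal c f z : C_continuous_at f z -> C_continuous_at (fun w => c * f w)%C z.
Proof.
  intros H eps Heps.
  assert (Hp : 0 < Cmod c + 1) by (generalize (Cmod_ge_0 c); lra).
  destruct (H (eps / (Cmod c + 1))) as [d [Hd Hw]]. apply Rdiv_lt_0_compat; auto.
  exists d; split; auto. intros w Hw'. specialize (Hw w Hw').
  replace (c * f w - c * f z)%C with (c * (f w - f z))%C by ring. rewrite Cmod_mult.
  apply Rle_lt_trans with ((Cmod c + 1) * Cmod (f w - f z)).
  { apply Rmult_le_compat_r. apply Cmod_ge_0. lra. }
  apply Rmult_Rdiv_lt; auto.
Qed.

Lemma C_continuous_at_minus_const f z c : C_continuous_at f z -> C_continuous_at (fun w => f w - c)%C z.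
Proof.
  intros H eps Heps. destruct (H eps Heps) as [d [Hd Hw]]. exists d; split; auto.
  intros w Hw'. replace (f w - c - (f z - c))%C with (f w - f z)%C by ring. auto.
Qed.

Definition path_derivable_pt_lim (g : R -> C) (t : R) (v : C) : Prop :=
  forall eps, 0 < eps -> exists del, 0 < del /\
    forall h, Rabs h < del -> Cmod (g (t + h)%R - g t - RtoC h * v) <= eps * Rabs h.

Definition path_continuous_at (g : R -> C) (t : R) : Prop :=
  forall eps, 0 < eps -> exists del, 0 < del /\
    forall s, Rabs (s - t) < del -> Cmod (g s - g t) < eps.

Lemma path_derivable_pt_lim_lipschitz g t v : path_derivable_pt_lim g t v -> exists del, 0 < del /\
  forall h, Rabs h < del -> Cmod (g (t + h)%R - g t) <= (Cmod v + 1) * Rabs h.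
Proof.
  intros H. destruct (H 1 Rlt_0_1) as [del [Hd Hw]]. exists del; split; auto.
  intros h Hh. specialize (Hw h Hh).
  replace (g (t + h)%R - g t)%C with ((g (t + h)%R - g t - RtoC h * v) + RtoC h * v)%C by ring.
  eapply Rle_trans. apply Cmod_triangle. rewrite Cmod_RtoC_mult. lra.
Qed.

Lemma path_derivable_pt_lim_comp (G : C -> C) (g : R -> C) t d v :
  C_derivable_pt_lim G (g t) d -> path_derivable_pt_lim g t v ->
  path_derivable_pt_lim (fun s => G (g s)) t (d * v).
Proof.
  intros HG Hg eps Heps.
  set (M := Cmod v + 1 + Cmod d).
  assert (HM : 0 < M) by (unfold M; generalize (Cmod_ge_0 v) (Cmod_ge_0 d); lra).
  assert (Hp : 0 < Cmod v + 1) by (generalize (Cmod_ge_0 v); lra).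
  destruct (path_derivable_pt_lim_lipschitz g t v Hg) as [d0 [Hd0 H0]].
  destruct (HG (eps / M)) as [dG [HdG H2]]. apply Rdiv_lt_0_compat; auto.
  destruct (Hg (eps / M)) as [d3 [Hd3 H3]]. apply Rdiv_lt_0_compat; auto.
  exists (Rmin d0 (Rmin d3 (dG / (Cmod v + 1)))). split.
  { repeat apply Rmin_pos; auto. apply Rdiv_lt_0_compat; auto. }
  intros h Hh.
  specialize (H0 h (Rlt_le_trans _ _ _ Hh (Rmin_l _ _))).
  specialize (H3 h (Rlt_le_trans _ _ _ Hh (Rle_trans _ _ _ (Rmin_r _ _) (Rmin_l _ _)))).
  assert (HhG := Rlt_le_trans _ _ _ Hh (Rle_trans _ _ _ (Rmin_r _ _) (Rmin_r _ _))).
  assert (HgG : Cmod (g (t + h)%R - g t) < dG) by (eapply Rle_lt_trans; [apply H0 | apply Rmult_Rdiv_lt; auto]).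
  specialize (H2 (g (t + h)%R) HgG).
  replace (G (g (t + h)%R) - G (g t) - RtoC h * (d * v))%C with
    ((G (g (t + h)%R) - G (g t) - d * (g (t + h)%R - g t)) + d * (g (t + h)%R - g t - RtoC h * v))%C by ring.
  eapply Rle_trans. apply Cmod_triangle. rewrite Cmod_mult.
  assert (Hx : eps / M * Cmod (g (t + h)%R - g t) <= eps / M * ((Cmod v + 1) * Rabs h)).
  { apply Rmult_le_compat_l; auto. left; apply Rdiv_lt_0_compat; auto. }
  assert (Hy : Cmod d * Cmod (g (t + h)%R - g t - RtoC h * v) <= Cmod d * (eps / M * Rabs h)).
  { apply Rmult_le_compat_l; auto. apply Cmod_ge_0. }
  replace (eps * Rabs h) with (eps / M * ((Cmod v + 1) * Rabs h) + Cmod d * (eps / M * Rabs h))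
    by (unfold M in HM |- *; field; lra).
  lra.
Qed.

Lemma derivable_pt_lim_of_linear_bound (u : R -> R) t l :
  (forall eps, 0 < eps -> exists del, 0 < del /\
     forall h, Rabs h < del -> Rabs (u (t + h)%R - u t - h * l) <= eps * Rabs h) ->
  derivable_pt_lim u t l.
Proof.
  intros H eps Heps.
  destruct (H (eps / 2)) as [del [Hd Hw]]. lra.
  exists (mkposreal del Hd). intros h Hh0 Hh. simpl in Hh.
  specialize (Hw h Hh).
  assert (0 < Rabs h) by (apply Rabs_pos_lt; auto).
  replace ((u (t + h)%R - u t) / h - l) with ((u (t + h)%R - u t - h * l) / h) by (field; auto).
  unfold Rdiv. rewrite Rabs_mult, Rabs_inv.
  apply Rmult_lt_reg_r with (Rabs h); auto. rewrite Rmult_assoc, Rinv_l by lra. nra.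
Qed.

Lemma path_derivable_pt_lim_fst g t v :
  path_derivable_pt_lim g t v -> derivable_pt_lim (fun s => fst (g s)) t (fst v).
Proof.
  intros H. apply derivable_pt_lim_of_linear_bound. intros eps Heps.
  destruct (H eps Heps) as [del [Hd Hw]]. exists del. split; auto. intros h Hh.
  eapply Rle_trans; [| apply (Hw h Hh)].
  replace (fst (g (t + h)%R) - fst (g t) - h * fst v) with (fst (g (t + h)%R - g t - RtoC h * v)%C)
    by (simpl; ring).
  apply re_le_Cmod.
Qed.

Lemma path_derivable_pt_lim_of_components (g : R -> C) t a b :
  derivable_pt_lim (fun s => fst (g s)) t a -> derivable_pt_lim (fun s => snd (g s)) t b ->
  path_derivable_pt_lim g t (a, b).
Proof.
  intros H1 H2 eps Heps.
  destruct (H1 (eps / 2)) as [d1 Hd1]. lra.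
  destruct (H2 (eps / 2)) as [d2 Hd2]. lra.
  exists (Rmin d1 d2). split. apply Rmin_pos; apply cond_pos.
  intros h Hh. destruct (Req_dec h 0) as [E|E].
  { subst h. rewrite Rplus_0_r.
    replace (g t - g t - RtoC 0 * (a, b))%C with (RtoC 0) by ring.
    rewrite Cmod_0, Rabs_R0. lra. }
  specialize (Hd1 h E (Rlt_le_trans _ _ _ Hh (Rmin_l _ _))).
  specialize (Hd2 h E (Rlt_le_trans _ _ _ Hh (Rmin_r _ _))).
  assert (Hp : 0 < Rabs h) by (apply Rabs_pos_lt; auto).
  assert (X1 : Rabs (fst (g (t + h)%R) - fst (g t) - h * a) <= eps / 2 * Rabs h).
  { replace (fst (g (t + h)%R) - fst (g t) - h * a) with (((fst (g (t + h)%R) - fst (g t)) / h - a) * h)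
      by (field; auto).
    rewrite Rabs_mult. apply Rmult_le_compat_r; lra. }
  assert (X2 : Rabs (snd (g (t + h)%R) - snd (g t) - h * b) <= eps / 2 * Rabs h).
  { replace (snd (g (t + h)%R) - snd (g t) - h * b) with (((snd (g (t + h)%R) - snd (g t)) / h - b) * h)
      by (field; auto).
    rewrite Rabs_mult. apply Rmult_le_compat_r; lra. }
  eapply Rle_trans. apply Cmod_le_Rabs_fst_snd. simpl.
  replace (fst (g (t + h)%R) + - fst (g t) + - (h * a - 0 * b)) with (fst (g (t + h)%R) - fst (g t) - h * a) by ring.
  replace (snd (g (t + h)%R) + - snd (g t) + - (h * b + 0 * a)) with (snd (g (t + h)%R) - snd (g t) - h * b) by ring.
  lra.
Qed.

Lemma path_continuous_at_comp (f : C -> C) g t v :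
  path_derivable_pt_lim g t v -> C_continuous_at f (g t) -> path_continuous_at (fun s => f (g s)) t.
Proof.
  intros Hg Hf eps Heps.
  destruct (Hf eps Heps) as [d1 [Hd1 H1]].
  destruct (path_derivable_pt_lim_lipschitz g t v Hg) as [d0 [Hd0 H0]].
  assert (Hp : 0 < Cmod v + 1) by (generalize (Cmod_ge_0 v); lra).
  exists (Rmin d0 (d1 / (Cmod v + 1))). split.
  { apply Rmin_pos; auto. apply Rdiv_lt_0_compat; auto. }
  intros s Hs. replace s with (t + (s - t)) by ring. apply H1.
  eapply Rle_lt_trans. apply H0. eapply Rlt_le_trans; [apply Hs | apply Rmin_l].
  apply Rmult_Rdiv_lt; auto. eapply Rlt_le_trans; [apply Hs | apply Rmin_r].
Qed.

Lemma continuous_of_path_continuous_at (p : C -> R) (F : R -> C) t :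
  (forall a b, Rabs (p a - p b) <= Cmod (a - b)) ->
  path_continuous_at F t -> continuous (fun s => p (F s)) t.
Proof.
  intros Hp H. apply continuity_pt_filterlim.
  intros eps Heps. destruct (H eps Heps) as [del [Hd Hs]].
  exists del. split; auto. intros s [_ Hs']. eapply Rle_lt_trans. apply Hp. apply Hs. exact Hs'.
Qed.

Lemma Rabs_fst_minus_le a b : Rabs (fst a - fst b) <= Cmod (a - b).
Proof. replace (fst a - fst b) with (fst (a - b)%C) by (simpl; ring). apply re_le_Cmod. Qed.

Lemma Rabs_snd_minus_le a b : Rabs (snd a - snd b) <= Cmod (a - b).
Proof. replace (snd a - snd b) with (snd (a - b)%C) by (simpl; ring). apply Rabs_snd_le_Cmod. Qed.

(** * Integrals along segments and triangles *)

Lemma plus_R (x y : R) : plus x y = x + y. Proof. reflexivity. Qed.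
Lemma scal_R (x y : R) : scal x y = x * y. Proof. reflexivity. Qed.
Lemma minus_R (x y : R) : minus x y = x - y. Proof. reflexivity. Qed.

Definition CRInt (g : R -> C) (a b : R) : C :=
  (RInt (fun t => fst (g t)) a b, RInt (fun t => snd (g t)) a b).

Definition ex_CRInt (g : R -> C) (a b : R) : Prop :=
  ex_RInt (fun t => fst (g t)) a b /\ ex_RInt (fun t => snd (g t)) a b.

Definition lerp (a b : C) (t : R) : C := (a + RtoC t * (b - a))%C.

Definition midpoint (a b : C) : C := lerp a b (1/2).

Definition seg_int (f : C -> C) (a b : C) : C := ((b - a) * CRInt (fun t => f (lerp a b t)) 0 1)%C.

Definition tri_int (f : C -> C) (a b c : C) : C := (seg_int f a b + seg_int f b c + seg_int f c a)%C.

Definition seg_continuous (f : C -> C) (a b : C) : Prop :=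
  forall t, 0 <= t <= 1 -> C_continuous_at f (lerp a b t).

Lemma lerp_0 a b : lerp a b 0 = a. Proof. unfold lerp. ring. Qed.
Lemma lerp_1 a b : lerp a b 1 = b. Proof. unfold lerp. ring. Qed.

Lemma lerp_lerp a b x y t : lerp (lerp a b x) (lerp a b y) t = lerp a b (x + t * (y - x)).
Proof. unfold lerp. rewrite RtoC_plus, RtoC_mult, RtoC_minus. ring. Qed.

Lemma Cmod_lerp_minus_le u v w s : 0 <= s <= 1 ->
  Cmod (lerp u v s - w) <= (1 - s) * Cmod (u - w) + s * Cmod (v - w).
Proof.
  intros Hs. replace (lerp u v s - w)%C with (RtoC (1 - s) * (u - w) + RtoC s * (v - w))%C
    by (unfold lerp; rewrite RtoC_minus; ring).
  eapply Rle_trans. apply Cmod_triangle. rewrite !Cmod_RtoC_mult, !Rabs_pos_eq by lra. lra.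
Qed.

Lemma Cmod_lerp_minus_max u v w r s : 0 <= s <= 1 ->
  Cmod (u - w) <= r -> Cmod (v - w) <= r -> Cmod (lerp u v s - w) <= r.
Proof. intros Hs Hu Hv. eapply Rle_trans. apply Cmod_lerp_minus_le; auto. nra. Qed.

Lemma path_derivable_pt_lim_lerp a b t : path_derivable_pt_lim (lerp a b) t (b - a).
Proof.
  intros eps Heps. exists 1. split. lra. intros h _. unfold lerp.
  replace (a + RtoC (t + h)%R * (b - a) - (a + RtoC t * (b - a)) - RtoC h * (b - a))%C with (RtoC 0)
    by (rewrite RtoC_plus; ring).
  rewrite Cmod_0. generalize (Rabs_pos h). nra.
Qed.

Lemma seg_continuous_ex_CRInt (f : C -> C) (a b : C) (x y : R) :
  seg_continuous f a b -> 0 <= x <= 1 -> 0 <= y <= 1 -> ex_CRInt (fun t => f (lerp a b t)) x y.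
Proof.
  intros H Hx Hy.
  assert (Hc : forall t, Rmin x y <= t <= Rmax x y -> path_continuous_at (fun t => f (lerp a b t)) t).
  { intros t Ht. eapply path_continuous_at_comp. apply path_derivable_pt_lim_lerp. apply H.
    split. apply Rle_trans with (Rmin x y). apply Rmin_glb; lra. lra.
    apply Rle_trans with (Rmax x y). lra. apply Rmax_lub; lra. }
  split; apply (ex_RInt_continuous (V := R_CompleteNormedModule)); intros t Ht;
    apply continuous_of_path_continuous_at; auto using Rabs_fst_minus_le, Rabs_snd_minus_le.
Qed.

Lemma seg_continuous_sub f a b x y : seg_continuous f a b -> 0 <= x <= 1 -> 0 <= y <= 1 ->
  seg_continuous f (lerp a b x) (lerp a b y).
Proof.
  intros H Hx Hy t Ht. rewrite lerp_lerp. apply H.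
  destruct (Rle_dec x y); split; nra.
Qed.

Lemma seg_continuous_rev f a b : seg_continuous f a b -> seg_continuous f b a.
Proof.
  intros H. generalize (seg_continuous_sub f a b 1 0 H). rewrite lerp_0, lerp_1. intro H'. apply H'; lra.
Qed.

Lemma CRInt_ext (g1 g2 : R -> C) (a b : R) : (forall t, g1 t = g2 t) -> CRInt g1 a b = CRInt g2 a b.
Proof. intros H. unfold CRInt. f_equal; apply RInt_ext; intros; rewrite H; reflexivity. Qed.

Lemma ex_CRInt_ext (g1 g2 : R -> C) (a b : R) :
  (forall t, g1 t = g2 t) -> ex_CRInt g1 a b -> ex_CRInt g2 a b.
Proof.
  intros H [H1 H2]. split; [eapply ex_RInt_ext, H1 | eapply ex_RInt_ext, H2]; intros; simpl; rewrite H; reflexivity.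
Qed.

Lemma CRInt_Chasles (g : R -> C) (a b c : R) :
  ex_CRInt g a b -> ex_CRInt g b c -> CRInt g a c = (CRInt g a b + CRInt g b c)%C.
Proof.
  intros [H1 H2] [H3 H4]. unfold CRInt. apply injective_projections; simpl.
  - rewrite <- (RInt_Chasles (V := R_CompleteNormedModule) _ a b c H1 H3). reflexivity.
  - rewrite <- (RInt_Chasles (V := R_CompleteNormedModule) _ a b c H2 H4). reflexivity.
Qed.

Lemma CRInt_comp_lin (g : R -> C) (u v : R) :
  ex_CRInt g v (u + v) -> ex_CRInt (fun t => g (u * t + v)%R) 0 1 ->
  (RtoC u * CRInt (fun t => g (u * t + v)%R) 0 1)%C = CRInt g v (u + v).
Proof.
  intros [H1 H2] [H3 H4]. unfold CRInt.
  assert (E1 := RInt_comp_lin (fun t => fst (g t)) u v 0 1).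
  assert (E2 := RInt_comp_lin (fun t => snd (g t)) u v 0 1).
  replace (u * 0 + v) with v in E1, E2 by ring. replace (u * 1 + v) with (u + v) in E1, E2 by ring.
  specialize (E1 H1). specialize (E2 H2).
  rewrite (RInt_scal (V := R_CompleteNormedModule)) in E1 by exact H3.
  rewrite (RInt_scal (V := R_CompleteNormedModule)) in E2 by exact H4.
  rewrite scal_R in E1, E2.
  apply injective_projections; simpl. rewrite <- E1. ring. rewrite <- E2. ring.
Qed.

Lemma CRInt_swap (g : R -> C) (a b : R) : ex_CRInt g a b -> CRInt g b a = (- CRInt g a b)%C.
Proof.
  intros [H1 H2]. unfold CRInt. apply injective_projections; simpl.
  - rewrite <- (opp_RInt_swap (V := R_CompleteNormedModule) _ a b H1). reflexivity.
  - rewrite <- (opp_RInt_swap (V := R_CompleteNormedModule) _ a b H2). reflexivity.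
Qed.

Lemma seg_int_reparam f a b u v :
  seg_continuous f a b -> 0 <= v <= 1 -> 0 <= u + v <= 1 ->
  (RtoC u * CRInt (fun t => f (lerp (lerp a b v) (lerp a b (u + v)%R) t)) 0 1)%C =
  CRInt (fun t => f (lerp a b t)) v (u + v).
Proof.
  intros Hc Hv Huv.
  assert (E : forall t, lerp a b (u * t + v)%R = lerp (lerp a b v) (lerp a b (u + v)%R) t)
    by (intro t; rewrite lerp_lerp; f_equal; ring).
  rewrite <- (CRInt_ext (fun t => f (lerp a b (u * t + v)%R))) by (intro; rewrite E; reflexivity).
  apply (CRInt_comp_lin (fun t => f (lerp a b t))).
  - apply seg_continuous_ex_CRInt; auto.
  - apply (ex_CRInt_ext (fun t => f (lerp (lerp a b v) (lerp a b (u + v)%R) t))).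
    + intro t. rewrite E. reflexivity.
    + apply seg_continuous_ex_CRInt; try lra. apply seg_continuous_sub; auto.
Qed.

Lemma seg_int_split f a b s : seg_continuous f a b -> 0 <= s <= 1 ->
  seg_int f a b = (seg_int f a (lerp a b s) + seg_int f (lerp a b s) b)%C.
Proof.
  intros Hc Hs.
  assert (C1 := seg_int_reparam f a b s 0).
  assert (C2 := seg_int_reparam f a b (1 - s) s).
  rewrite Rplus_0_r, lerp_0 in C1. replace (1 - s + s) with 1 in C2 by ring. rewrite lerp_1 in C2.
  specialize (C1 Hc ltac:(lra) ltac:(lra)). specialize (C2 Hc ltac:(lra) ltac:(lra)).
  unfold seg_int.
  rewrite (CRInt_Chasles _ 0 s 1) by (apply seg_continuous_ex_CRInt; auto; lra).
  rewrite <- C1, <- C2. unfold lerp. rewrite RtoC_minus. ring.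
Qed.

Lemma seg_int_rev f a b : seg_continuous f a b -> seg_int f b a = (- seg_int f a b)%C.
Proof.
  intros Hc.
  assert (C1 := seg_int_reparam f a b (-1) 1).
  rewrite lerp_1 in C1. replace (-1 + 1) with 0 in C1 by ring. rewrite lerp_0 in C1.
  specialize (C1 Hc ltac:(lra) ltac:(lra)).
  rewrite (CRInt_swap (fun t => f (lerp a b t)) 0 1) in C1 by (apply seg_continuous_ex_CRInt; auto; lra).
  unfold seg_int.
  replace (CRInt (fun t => f (lerp b a t)) 0 1) with (- (RtoC (-1) * CRInt (fun t => f (lerp b a t)) 0 1))%C
    by (apply injective_projections; simpl; ring).
  rewrite C1. ring.
Qed.

Lemma seg_int_bound f a b M : seg_continuous f a b ->
  (forall t, 0 <= t <= 1 -> Cmod (f (lerp a b t)) <= M) ->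
  Cmod (seg_int f a b) <= 2 * M * Cmod (b - a).
Proof.
  intros Hc HM. destruct (seg_continuous_ex_CRInt f a b 0 1 Hc) as [X1 X2]; try lra.
  unfold seg_int. rewrite Cmod_mult.
  assert (H : Cmod (CRInt (fun t => f (lerp a b t)) 0 1) <= 2 * M).
  { eapply Rle_trans. apply Cmod_le_Rabs_fst_snd. unfold CRInt; simpl.
    assert (B1 : Rabs (RInt (fun t => fst (f (lerp a b t))) 0 1) <= (1 - 0) * M).
    { apply abs_RInt_le_const; auto; try lra. intros t Ht. eapply Rle_trans. apply re_le_Cmod. auto. }
    assert (B2 : Rabs (RInt (fun t => snd (f (lerp a b t))) 0 1) <= (1 - 0) * M).
    { apply abs_RInt_le_const; auto; try lra. intros t Ht. eapply Rle_trans. apply Rabs_snd_le_Cmod. auto. }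
    lra. }
  generalize (Cmod_ge_0 (b - a)). nra.
Qed.

Lemma seg_int_minus f g a b : seg_continuous f a b -> seg_continuous g a b ->
  seg_int (fun z => f z - g z)%C a b = (seg_int f a b - seg_int g a b)%C.
Proof.
  intros Hf Hg. destruct (seg_continuous_ex_CRInt f a b 0 1 Hf) as [X1 X2]; try lra.
  destruct (seg_continuous_ex_CRInt g a b 0 1 Hg) as [Y1 Y2]; try lra.
  unfold seg_int.
  replace (CRInt (fun t => (f (lerp a b t) - g (lerp a b t))%C) 0 1) with
     (CRInt (fun t => f (lerp a b t)) 0 1 - CRInt (fun t => g (lerp a b t)) 0 1)%C; [ring |].
  symmetry. unfold CRInt. apply injective_projections; simpl.
  - transitivity (minus (RInt (fun t => fst (f (lerp a b t))) 0 1) (RInt (fun t => fst (g (lerp a b t))) 0 1));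
      [| reflexivity].
    rewrite <- (RInt_minus (V := R_CompleteNormedModule) _ _ 0 1 X1 Y1).
    apply RInt_ext. intros. simpl. rewrite minus_R. ring.
  - transitivity (minus (RInt (fun t => snd (f (lerp a b t))) 0 1) (RInt (fun t => snd (g (lerp a b t))) 0 1));
      [| reflexivity].
    rewrite <- (RInt_minus (V := R_CompleteNormedModule) _ _ 0 1 X2 Y2).
    apply RInt_ext. intros. simpl. rewrite minus_R. ring.
Qed.

Lemma RInt_affine_01 A B : RInt (fun t => A + B * t) 0 1 = A + B / 2.
Proof.
  assert (H : is_RInt (V := R_CompleteNormedModule) (fun t => A + B * t) 0 1
     (minus ((fun t => A * t + B * t ^ 2 / 2) 1) ((fun t => A * t + B * t ^ 2 / 2) 0))).
  { apply (is_RInt_derive (V := R_CompleteNormedModule) (fun t => A * t + B * t ^ 2 / 2)).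
    - intros x _. auto_derive. auto. field.
    - intros x _. apply (ex_derive_continuous (K := R_AbsRing) (V := R_NormedModule)). auto_derive. auto. }
  apply is_RInt_unique in H. rewrite H, minus_R. simpl. field.
Qed.

Lemma seg_int_affine al be a b : seg_int (fun z => al + be * z)%C a b = ((b - a) * (al + be * (a + b) / 2))%C.
Proof.
  unfold seg_int, CRInt.
  rewrite (RInt_ext _ (fun t => fst (al + be * a)%C + fst (be * (b - a))%C * t))
    by (intros; unfold lerp; simpl; ring).
  rewrite (RInt_ext (fun t => snd (al + be * lerp a b t)%C) (fun t => snd (al + be * a)%C + snd (be * (b - a))%C * t))
    by (intros; unfold lerp; simpl; ring).
  rewrite !RInt_affine_01. apply injective_projections; simpl; field.
Qed.

Lemma seg_int_const c a b : seg_int (fun _ => c) a b = ((b - a) * c)%C.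
Proof.
  replace (fun _ : C => c) with (fun z : C => c + 0 * z)%C by (extensionality z; ring).
  rewrite seg_int_affine. apply injective_projections; simpl; field.
Qed.

Lemma tri_int_affine al be a b c : tri_int (fun z => al + be * z)%C a b c = 0%C.
Proof. unfold tri_int. rewrite !seg_int_affine. field. Qed.

Lemma tri_int_minus f g a b c : seg_continuous f a b -> seg_continuous f b c -> seg_continuous f c a ->
  seg_continuous g a b -> seg_continuous g b c -> seg_continuous g c a ->
  tri_int (fun z => f z - g z)%C a b c = (tri_int f a b c - tri_int g a b c)%C.
Proof. intros. unfold tri_int. rewrite !seg_int_minus by auto. ring. Qed.

Lemma tri_int_subdivide f a b c :
  seg_continuous f a b -> seg_continuous f b c -> seg_continuous f c a ->
  seg_continuous f (midpoint a b) (midpoint c a) -> seg_continuous f (midpoint b c) (midpoint a b) ->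
  seg_continuous f (midpoint c a) (midpoint b c) ->
  tri_int f a b c =
  (tri_int f a (midpoint a b) (midpoint c a) + tri_int f (midpoint a b) b (midpoint b c)
   + tri_int f (midpoint c a) (midpoint b c) c
   + tri_int f (midpoint a b) (midpoint b c) (midpoint c a))%C.
Proof.
  intros H1 H2 H3 H4 H5 H6. unfold tri_int.
  rewrite (seg_int_split f a b (1/2)), (seg_int_split f b c (1/2)), (seg_int_split f c a (1/2))
    by (auto; lra).
  fold (midpoint a b) (midpoint b c) (midpoint c a).
  rewrite (seg_int_rev f (midpoint c a) (midpoint a b)), (seg_int_rev f (midpoint a b) (midpoint b c)),
    (seg_int_rev f (midpoint b c) (midpoint c a)) by (apply seg_continuous_rev; auto).
  ring.
Qed.

(** * Goursat's lemma *)

Lemma Rle_0_of_le_small_mult (x K : R) : (forall eps, 0 < eps <= 1 -> x <= eps * K) -> x <= 0.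
Proof.
  intros H. apply Rnot_lt_le. intro Hx.
  assert (HK : 0 < Rabs K + 1) by (generalize (Rabs_pos K); lra).
  set (e := Rmin 1 (x / (2 * (Rabs K + 1)))).
  assert (He : 0 < e) by (apply Rmin_pos; [lra | apply Rdiv_lt_0_compat; lra]).
  assert (He2 : e <= x / (2 * (Rabs K + 1))) by apply Rmin_r.
  specialize (H e (conj He (Rmin_l _ _))).
  assert (e * K <= e * (Rabs K + 1)) by (apply Rmult_le_compat_l; [lra | generalize (Rle_abs K); lra]).
  assert (e * (Rabs K + 1) <= x / 2).
  { apply Rle_trans with (x / (2 * (Rabs K + 1)) * (Rabs K + 1)).
    apply Rmult_le_compat_r; lra. right. field. lra. }
  lra.
Qed.

Lemma half_pow_pos k : 0 < (/2) ^ k.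
Proof. apply pow_lt. lra. Qed.

Lemma half_pow_small P eps : 0 < eps -> exists k, P * (/2) ^ k < eps.
Proof.
  intros He. destruct (Rle_dec P 0). { exists O. simpl. lra. }
  destruct (pow_lt_1_zero (/2)) with (eps / P) as [N HN].
  { rewrite Rabs_pos_eq; lra. }
  { apply Rdiv_lt_0_compat; lra. }
  exists N. specialize (HN N (le_n N)). rewrite Rabs_pos_eq in HN by (apply pow_le; lra).
  rewrite Rmult_comm. apply Rmult_Rdiv_lt in HN; [rewrite Rmult_comm | ]; lra.
Qed.

Lemma half_pow_le_mono k m : (k <= m)%nat -> (/2) ^ m <= (/2) ^ k.
Proof.
  intros H. rewrite !pow_inv. apply Rinv_le_contravar; [apply pow_lt; lra | apply Rle_pow; auto; lra].
Qed.

Lemma geometric_cauchy_limit (u : nat -> R) (P : R) :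
  (forall k m, (k <= m)%nat -> Rabs (u m - u k) <= P * (/2) ^ k) ->
  exists l, forall k, Rabs (u k - l) <= P * (/2) ^ k.
Proof.
  intros Hu.
  assert (HP : 0 <= P).
  { specialize (Hu O O (le_n O)). simpl in Hu. generalize (Rabs_pos (u O - u O)). lra. }
  destruct (Rcomplete.R_complete u) as [l Hl].
  { intros eps Heps. destruct (half_pow_small P eps Heps) as [N HN]. exists N.
    intros n m Hn Hm. unfold Rdist. destruct (Nat.le_ge_cases n m).
    - rewrite Rabs_minus_sym. eapply Rle_lt_trans. apply Hu; auto.
      eapply Rle_lt_trans; [| apply HN]. apply Rmult_le_compat_l; auto. apply half_pow_le_mono; lia.
    - eapply Rle_lt_trans. apply Hu; auto.
      eapply Rle_lt_trans; [| apply HN]. apply Rmult_le_compat_l; auto. apply half_pow_le_mono; lia. }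
  exists l. intros k. apply Rnot_lt_le. intro Hlt.
  destruct (Hl (Rabs (u k - l) - P * (/2) ^ k)) as [N HN]. lra.
  specialize (HN (Nat.max N k) (Nat.le_max_l N k)). unfold Rdist in HN.
  specialize (Hu k (Nat.max N k) (Nat.le_max_r N k)).
  generalize (Rabs_triang (u k - u (Nat.max N k)) (u (Nat.max N k) - l)).
  replace (u k - u (Nat.max N k) + (u (Nat.max N k) - l)) with (u k - l) by ring.
  rewrite Rabs_minus_sym in Hu. lra.
Qed.

Record triangle := mkTriangle { tA : C; tB : C; tC : C }.

Definition tri_int_of (f : C -> C) (t : triangle) : C := tri_int f (tA t) (tB t) (tC t).

Definition perimeter (t : triangle) : R :=
  Cmod (tB t - tA t) + Cmod (tC t - tB t) + Cmod (tA t - tC t).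

Definition is_vertex (t : triangle) (x : C) : Prop := x = tA t \/ x = tB t \/ x = tC t.

Definition corner_A t := mkTriangle (tA t) (midpoint (tA t) (tB t)) (midpoint (tC t) (tA t)).
Definition corner_B t := mkTriangle (midpoint (tA t) (tB t)) (tB t) (midpoint (tB t) (tC t)).
Definition corner_C t := mkTriangle (midpoint (tC t) (tA t)) (midpoint (tB t) (tC t)) (tC t).
Definition medial t := mkTriangle (midpoint (tA t) (tB t)) (midpoint (tB t) (tC t)) (midpoint (tC t) (tA t)).

(** Some subtriangle carries a quarter of the integral: the four integrals add up to it. *)
Definition heavy_subtriangle (f : C -> C) (t : triangle) : triangle :=
  if Rle_dec (Cmod (tri_int_of f t) / 4) (Cmod (tri_int_of f (corner_A t))) then corner_A t else
  if Rle_dec (Cmod (tri_int_of f t) / 4) (Cmod (tri_int_of f (corner_B t))) then corner_B t else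
  if Rle_dec (Cmod (tri_int_of f t) / 4) (Cmod (tri_int_of f (corner_C t))) then corner_C t else medial t.

Fixpoint goursat_nest (f : C -> C) (t : triangle) (k : nat) : triangle :=
  match k with O => t | S k => heavy_subtriangle f (goursat_nest f t k) end.

Lemma Cmod_half_eq (y x : C) : x = (RtoC (1/2) * y)%C -> Cmod x = Cmod y / 2.
Proof. intros ->. rewrite Cmod_RtoC_mult, Rabs_pos_eq by lra. field. Qed.

Ltac half_tac x y :=
  rewrite (Cmod_half_eq y x) by (unfold midpoint, lerp; apply injective_projections; simpl; field).

Lemma perimeter_heavy_subtriangle f t : perimeter (heavy_subtriangle f t) = perimeter t / 2.
Proof.
  destruct t as [a b c]. unfold heavy_subtriangle, perimeter.
  repeat destruct Rle_dec; simpl.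
  - half_tac (midpoint a b - a)%C (b - a)%C. half_tac (midpoint c a - midpoint a b)%C (c - b)%C.
    half_tac (a - midpoint c a)%C (a - c)%C. field.
  - half_tac (b - midpoint a b)%C (b - a)%C. half_tac (midpoint b c - b)%C (c - b)%C.
    half_tac (midpoint a b - midpoint b c)%C (a - c)%C. field.
  - half_tac (midpoint b c - midpoint c a)%C (b - a)%C. half_tac (c - midpoint b c)%C (c - b)%C.
    half_tac (midpoint c a - c)%C (a - c)%C. field.
  - half_tac (midpoint b c - midpoint a b)%C (c - a)%C. half_tac (midpoint c a - midpoint b c)%C (a - b)%C.
    half_tac (midpoint a b - midpoint c a)%C (b - c)%C.
    rewrite (Cmod_minus_sym c a), (Cmod_minus_sym a b), (Cmod_minus_sym b c). field.
Qed.

Lemma perimeter_ge_0 t : 0 <= perimeter t.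
Proof.
  unfold perimeter. generalize (Cmod_ge_0 (tB t - tA t)) (Cmod_ge_0 (tC t - tB t)) (Cmod_ge_0 (tA t - tC t)).
  lra.
Qed.

Lemma Cmod_vertex_minus_tA_le_perimeter t x : is_vertex t x -> Cmod (x - tA t) <= perimeter t.
Proof.
  unfold perimeter.
  generalize (Cmod_ge_0 (tB t - tA t)) (Cmod_ge_0 (tC t - tB t)) (Cmod_ge_0 (tA t - tC t)).
  intros ? ? ? [E | [E | E]]; rewrite E.
  - rewrite Cmod_minus_self. lra.
  - lra.
  - rewrite Cmod_minus_sym. lra.
Qed.

Lemma Cmod_heavy_subtriangle_tA t f : Cmod (tA (heavy_subtriangle f t) - tA t) <= perimeter t.
Proof.
  assert (HB := Cmod_vertex_minus_tA_le_perimeter t (tB t) (or_intror (or_introl eq_refl))).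
  assert (HC := Cmod_vertex_minus_tA_le_perimeter t (tC t) (or_intror (or_intror eq_refl))).
  assert (HA := Cmod_vertex_minus_tA_le_perimeter t (tA t) (or_introl eq_refl)).
  assert (Hab : Cmod (midpoint (tA t) (tB t) - tA t) <= perimeter t).
  { half_tac (midpoint (tA t) (tB t) - tA t)%C (tB t - tA t)%C. generalize (Cmod_ge_0 (tB t - tA t)). lra. }
  assert (Hca : Cmod (midpoint (tC t) (tA t) - tA t) <= perimeter t).
  { half_tac (midpoint (tC t) (tA t) - tA t)%C (tC t - tA t)%C. generalize (Cmod_ge_0 (tC t - tA t)). lra. }
  unfold heavy_subtriangle. repeat destruct Rle_dec; simpl; auto.
Qed.

Lemma Cmod_edge_minus_tA_le_perimeter t u v s : 0 <= s <= 1 -> is_vertex t u -> is_vertex t v ->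
  Cmod (lerp u v s - tA t) <= perimeter t.
Proof.
  intros Hs Hu Hv. apply Cmod_lerp_minus_max; auto using Cmod_vertex_minus_tA_le_perimeter.
Qed.

Section Goursat.

Variable K : C -> Prop.
Hypothesis K_convex : forall u v s, K u -> K v -> 0 <= s <= 1 -> K (lerp u v s).
Hypothesis K_closed : forall p, (forall eps, 0 < eps -> exists x, K x /\ Cmod (x - p) < eps) -> K p.
Variable f : C -> C.
Hypothesis f_derivable : forall z, K z -> C_derivable_at f z.

Definition triangle_in_K (t : triangle) : Prop := K (tA t) /\ K (tB t) /\ K (tC t).

Lemma seg_continuous_in_K u v : K u -> K v -> seg_continuous f u v.
Proof. intros Hu Hv s Hs. apply C_derivable_at_continuous, f_derivable, K_convex; auto. Qed.

Lemma midpoint_in_K u v : K u -> K v -> K (midpoint u v).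
Proof. intros. apply K_convex; auto; lra. Qed.

Lemma heavy_subtriangle_in_K t : triangle_in_K t -> triangle_in_K (heavy_subtriangle f t).
Proof.
  intros [Ha [Hb Hc]].
  assert (M1 := midpoint_in_K _ _ Ha Hb). assert (M2 := midpoint_in_K _ _ Hb Hc).
  assert (M3 := midpoint_in_K _ _ Hc Ha).
  unfold heavy_subtriangle, triangle_in_K. repeat destruct Rle_dec; simpl; auto.
Qed.

Lemma tri_int_le_4_heavy_subtriangle t : triangle_in_K t ->
  Cmod (tri_int_of f t) <= 4 * Cmod (tri_int_of f (heavy_subtriangle f t)).
Proof.
  intros [Ha [Hb Hc]].
  assert (M1 := midpoint_in_K _ _ Ha Hb). assert (M2 := midpoint_in_K _ _ Hb Hc).
  assert (M3 := midpoint_in_K _ _ Hc Ha).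
  assert (E : tri_int_of f t = (tri_int_of f (corner_A t) + tri_int_of f (corner_B t)
                                + tri_int_of f (corner_C t) + tri_int_of f (medial t))%C).
  { unfold tri_int_of. apply tri_int_subdivide; apply seg_continuous_in_K; auto. }
  assert (Hs : Cmod (tri_int_of f t) <= Cmod (tri_int_of f (corner_A t)) + Cmod (tri_int_of f (corner_B t))
                 + Cmod (tri_int_of f (corner_C t)) + Cmod (tri_int_of f (medial t))).
  { rewrite E. eapply Rle_trans. apply Cmod_triangle.
    generalize (Cmod_triangle3 (tri_int_of f (corner_A t)) (tri_int_of f (corner_B t)) (tri_int_of f (corner_C t))).
    lra. }
  unfold heavy_subtriangle. repeat destruct Rle_dec; lra.
Qed.

Lemma goursat_nest_spec t0 : triangle_in_K t0 -> forall k,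
  triangle_in_K (goursat_nest f t0 k) /\ perimeter (goursat_nest f t0 k) = perimeter t0 * (/2) ^ k /\
  Cmod (tri_int_of f t0) * ((/2) ^ k) ^ 2 <= Cmod (tri_int_of f (goursat_nest f t0 k)).
Proof.
  intros H0. induction k as [| k [IH1 [IH2 IH3]]]; simpl.
  - split; [auto | split; [ring | lra]].
  - split; [apply heavy_subtriangle_in_K; auto |]. split.
    + rewrite perimeter_heavy_subtriangle, IH2. field.
    + generalize (tri_int_le_4_heavy_subtriangle _ IH1). intro Hp.
      replace ((/2 * (/2) ^ k) ^ 2) with (((/2) ^ k) ^ 2 / 4) by field. lra.
Qed.

Lemma goursat_nest_tA_cauchy t0 : triangle_in_K t0 -> forall k m, (k <= m)%nat ->
  Cmod (tA (goursat_nest f t0 m) - tA (goursat_nest f t0 k)) <= 2 * perimeter t0 * (/2) ^ k.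
Proof.
  intros H0 k m Hkm.
  cut (Cmod (tA (goursat_nest f t0 m) - tA (goursat_nest f t0 k))
       <= 2 * perimeter t0 * (/2) ^ k - 2 * perimeter t0 * (/2) ^ m).
  { generalize (half_pow_pos m) (perimeter_ge_0 t0). nra. }
  induction Hkm.
  - rewrite Cmod_minus_self. lra.
  - simpl. eapply Rle_trans. apply Cmod_dist_triangle with (b := tA (goursat_nest f t0 m)).
    generalize (Cmod_heavy_subtriangle_tA (goursat_nest f t0 m) f).
    destruct (goursat_nest_spec t0 H0 m) as [_ [E _]]. rewrite E. lra.
Qed.

Lemma goursat_nest_limit t0 : triangle_in_K t0 -> exists p, K p /\
  forall k, Cmod (tA (goursat_nest f t0 k) - p) <= 4 * perimeter t0 * (/2) ^ k.
Proof.
  intros H0. set (a := fun k => tA (goursat_nest f t0 k)).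
  assert (HC := goursat_nest_tA_cauchy t0 H0).
  destruct (geometric_cauchy_limit (fun k => fst (a k)) (2 * perimeter t0)) as [p1 Hp1].
  { intros k m Hkm. eapply Rle_trans. apply Rabs_fst_minus_le. apply (HC k m Hkm). }
  destruct (geometric_cauchy_limit (fun k => snd (a k)) (2 * perimeter t0)) as [p2 Hp2].
  { intros k m Hkm. eapply Rle_trans. apply Rabs_snd_minus_le. apply (HC k m Hkm). }
  assert (Hd : forall k, Cmod (a k - (p1, p2)) <= 4 * perimeter t0 * (/2) ^ k).
  { intros k. eapply Rle_trans. apply Cmod_le_Rabs_fst_snd.
    generalize (Hp1 k) (Hp2 k). simpl. unfold Rminus. lra. }
  exists (p1, p2). split; auto.
  apply K_closed. intros eps Heps.
  destruct (half_pow_small (4 * perimeter t0) eps Heps) as [k Hk].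
  exists (a k). split.
  - apply (goursat_nest_spec t0 H0 k).
  - eapply Rle_lt_trans. apply Hd. auto.
Qed.

(** The affine part [f p + d (z - p)] integrates to zero around every triangle. *)
Lemma tri_int_linearization_bound t p d E : triangle_in_K t ->
  (forall u v s, is_vertex t u -> is_vertex t v -> 0 <= s <= 1 ->
     Cmod (f (lerp u v s) - f p - d * (lerp u v s - p)) <= E) ->
  Cmod (tri_int_of f t) <= 2 * E * perimeter t.
Proof.
  intros [Ka [Kb Kc]] HE.
  set (al := (f p - d * p)%C).
  set (e := fun z => (f z - (al + d * z))%C).
  assert (Saff : forall u v, seg_continuous (fun z => al + d * z)%C u v)
    by (intros u v s _; apply C_continuous_at_affine).
  assert (Se : forall u v, K u -> K v -> seg_continuous e u v).
  { intros u v Ku Kv s Hs eps Heps.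
    destruct (seg_continuous_in_K u v Ku Kv s Hs (eps / 2)) as [d1 [Hd1 H1]]. lra.
    destruct (C_continuous_at_affine al d (lerp u v s) (eps / 2)) as [d2 [Hd2 H2]]. lra.
    exists (Rmin d1 d2). split. apply Rmin_pos; auto. intros w Hw. unfold e.
    replace (f w - (al + d * w) - (f (lerp u v s) - (al + d * lerp u v s)))%C with
      ((f w - f (lerp u v s)) - ((al + d * w) - (al + d * lerp u v s)))%C by ring.
    eapply Rle_lt_trans. apply Cmod_minus_le.
    generalize (H1 w (Rlt_le_trans _ _ _ Hw (Rmin_l _ _))) (H2 w (Rlt_le_trans _ _ _ Hw (Rmin_r _ _))). lra. }
  assert (Et : tri_int_of f t = tri_int e (tA t) (tB t) (tC t)).
  { unfold e. rewrite tri_int_minus by (apply seg_continuous_in_K || apply Saff; auto).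
    rewrite tri_int_affine. unfold tri_int_of. ring. }
  assert (Hb : forall u v, is_vertex t u -> is_vertex t v -> K u -> K v ->
     Cmod (seg_int e u v) <= 2 * E * Cmod (v - u)).
  { intros u v Hu Hv Ku Kv. apply seg_int_bound; auto. intros s Hs. unfold e, al.
    replace (f (lerp u v s) - (f p - d * p + d * lerp u v s))%C with
      (f (lerp u v s) - f p - d * (lerp u v s - p))%C by ring. auto. }
  rewrite Et. unfold tri_int, perimeter. eapply Rle_trans. apply Cmod_triangle3.
  assert (Va : is_vertex t (tA t)) by (left; auto).
  assert (Vb : is_vertex t (tB t)) by (right; left; auto).
  assert (Vc : is_vertex t (tC t)) by (right; right; auto).
  generalize (Hb _ _ Va Vb Ka Kb) (Hb _ _ Vb Vc Kb Kc) (Hb _ _ Vc Va Kc Ka). lra.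
Qed.

Theorem goursat a b c : K a -> K b -> K c -> tri_int f a b c = 0%C.
Proof.
  intros Ha Hb Hc. set (t0 := mkTriangle a b c).
  assert (H0 : triangle_in_K t0) by (repeat split; auto).
  change (tri_int f a b c) with (tri_int_of f t0).
  destruct (goursat_nest_limit t0 H0) as [p [Kp Hp]].
  destruct (f_derivable p Kp) as [d Hd].
  apply Cmod_eq_0, Rle_antisym; [| apply Cmod_ge_0].
  apply (Rle_0_of_le_small_mult _ (10 * perimeter t0 ^ 2)). intros eps [Heps _].
  destruct (Hd eps Heps) as [del [Hdel Hw]].
  destruct (half_pow_small (5 * perimeter t0) del Hdel) as [k Hk].
  destruct (goursat_nest_spec t0 H0 k) as [Kk [Eper Etri]].
  set (P := perimeter t0) in *. set (tk := goursat_nest f t0 k) in *. set (hk := (/2) ^ k) in *.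
  assert (Hhk : 0 < hk) by apply half_pow_pos.
  assert (Hbound : Cmod (tri_int_of f tk) <= 2 * (eps * (5 * P * hk)) * (P * hk)).
  { rewrite <- Eper. apply (tri_int_linearization_bound tk p d); auto.
    intros u v s Hu Hv Hs.
    assert (Hz : Cmod (lerp u v s - p) <= 5 * P * hk).
    { eapply Rle_trans. apply Cmod_dist_triangle with (b := tA tk).
      generalize (Cmod_edge_minus_tA_le_perimeter tk u v s Hs Hu Hv) (Hp k).
      fold tk hk. rewrite Eper. lra. }
    eapply Rle_trans. apply Hw. lra. apply Rmult_le_compat_l; lra. }
  apply Rmult_le_reg_r with (hk ^ 2). apply pow_lt; auto.
  eapply Rle_trans. apply Etri. eapply Rle_trans. apply Hbound. right. ring.
Qed.

End Goursat.

(** * A primitive of the difference quotient *)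

Definition half_disc (z1 c : C) (r h : R) (x : C) : Prop :=
  Cmod (x - z1) <= r /\ h <= fst ((x - z1) * c)%C.

Lemma fst_lerp_minus_mult z1 u v t c :
  fst ((lerp u v t - z1) * c)%C = (1 - t) * fst ((u - z1) * c)%C + t * fst ((v - z1) * c)%C.
Proof. unfold lerp. simpl. ring. Qed.

Lemma half_disc_convex z1 c r h u v t :
  half_disc z1 c r h u -> half_disc z1 c r h v -> 0 <= t <= 1 -> half_disc z1 c r h (lerp u v t).
Proof.
  intros [Hu1 Hu2] [Hv1 Hv2] Ht. split.
  - apply Cmod_lerp_minus_max; auto.
  - rewrite fst_lerp_minus_mult. nra.
Qed.

Lemma half_disc_closed z1 c r h p :
  (forall eps, 0 < eps -> exists x, half_disc z1 c r h x /\ Cmod (x - p) < eps) -> half_disc z1 c r h p.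
Proof.
  intros Hp. split.
  - apply Rnot_lt_le. intro Hlt. destruct (Hp (Cmod (p - z1) - r)) as [x [[Hx1 _] Hx2]]. lra.
    generalize (Cmod_dist_triangle p x z1). rewrite (Cmod_minus_sym p x). lra.
  - apply Rnot_lt_le. intro Hlt.
    assert (Hc : 0 < Cmod c + 1) by (generalize (Cmod_ge_0 c); lra).
    destruct (Hp ((h - fst ((p - z1) * c)%C) / (Cmod c + 1))) as [x [[_ Hx1] Hx2]].
    { apply Rdiv_lt_0_compat; lra. }
    assert (E : fst ((x - z1) * c)%C = fst ((p - z1) * c)%C + fst ((x - p) * c)%C) by (simpl; ring).
    apply Rmult_Rdiv_lt in Hx2; auto.
    generalize (re_le_Cmod ((x - p) * c)%C). rewrite Cmod_mult. unfold Re. intro Habs.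
    apply Rabs_le_inv in Habs. generalize (Cmod_ge_0 (x - p)) (Cmod_ge_0 c). nra.
Qed.

Definition circle (z1 rho : C) (t : R) : C := (z1 + rho * (cos t, sin t))%C.

Lemma path_derivable_pt_lim_circle z1 rho t :
  path_derivable_pt_lim (circle z1 rho) t (rho * ((- sin t)%R, cos t))%C.
Proof.
  replace (rho * ((- sin t)%R, cos t))%C with
    (fst rho * (- sin t) - snd rho * cos t, fst rho * cos t + snd rho * (- sin t))
    by (apply injective_projections; simpl; ring).
  apply path_derivable_pt_lim_of_components; apply is_derive_Reals; unfold circle; simpl;
    auto_derive; auto; ring.
Qed.

Lemma Cmod_circle_minus_center z1 rho t : Cmod (circle z1 rho t - z1) = Cmod rho.
Proof.
  unfold circle. replace (z1 + rho * (cos t, sin t) - z1)%C with (rho * (cos t, sin t))%C by ring.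
  rewrite Cmod_mult. replace (Cmod (cos t, sin t)) with 1; [ring |].
  unfold Cmod. cbn [fst snd]. rewrite <- sqrt_1. f_equal.
  generalize (sin2_cos2 t). unfold Rsqr. nra.
Qed.

Section DifferenceQuotient.

Variables (z1 : C) (R0 : R) (f : C -> C) (d1 : C).
Hypothesis R0_pos : 0 < R0.
Hypothesis f_derivable_ball : forall z, Cmod (z - z1) < R0 -> C_derivable_at f z.
Hypothesis f_derivable_z1 : C_derivable_pt_lim f z1 d1.

Definition dquot (z : C) : C := if Ceq_dec z z1 then d1 else ((f z - f z1) / (z - z1))%C.

Lemma dquot_derivable_at w : w <> z1 -> Cmod (w - z1) < R0 -> C_derivable_at dquot w.
Proof.
  intros Hw HR.
  assert (Hpos : 0 < Cmod (w - z1)) by (apply Cmod_gt_0, Cminus_neq_0; auto).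
  assert (Hg : C_derivable_at (fun z => (f z - f z1) * Cinv (z - z1))%C w).
  { apply C_derivable_at_mult.
    - apply C_derivable_at_minus; auto using C_derivable_at_const.
    - apply C_derivable_at_Cinv.
      + apply C_derivable_at_minus; auto using C_derivable_at_id, C_derivable_at_const.
      + apply Cminus_neq_0; auto. }
  destruct Hg as [dg Hg]. exists dg.
  apply C_derivable_pt_lim_local with (del := Cmod (w - z1)) (g := fun z => ((f z - f z1) * Cinv (z - z1))%C);
    auto.
  intros x Hx. unfold dquot. destruct (Ceq_dec x z1) as [E | E].
  - subst. rewrite Cmod_minus_sym in Hx. lra.
  - reflexivity.
Qed.

Lemma dquot_continuous_at_center : C_continuous_at dquot z1.
Proof.
  intros eps Heps. destruct (f_derivable_z1 (eps / 2)) as [del [Hdel Hw]]. lra.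
  exists del. split; auto. intros w Hw'.
  unfold dquot. destruct (Ceq_dec z1 z1) as [_ | E]; [| congruence].
  destruct (Ceq_dec w z1) as [E | E].
  { rewrite Cmod_minus_self. auto. }
  assert (Hn := Cminus_neq_0 _ _ E).
  assert (Hp : 0 < Cmod (w - z1)) by (apply Cmod_gt_0; auto).
  replace ((f w - f z1) / (w - z1) - d1)%C with ((f w - f z1 - d1 * (w - z1)) / (w - z1))%C by (field; auto).
  rewrite Cmod_div by auto. specialize (Hw w Hw').
  apply Rle_lt_trans with (eps / 2); [| lra].
  apply Rmult_le_reg_r with (Cmod (w - z1)); auto. unfold Rdiv. rewrite Rmult_assoc, Rinv_l by lra. lra.
Qed.

Lemma dquot_continuous_at z : Cmod (z - z1) < R0 -> C_continuous_at dquot z.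
Proof.
  intros Hz. destruct (Ceq_dec z z1) as [E | E].
  - subst. apply dquot_continuous_at_center.
  - apply C_derivable_at_continuous, dquot_derivable_at; auto.
Qed.

Lemma seg_continuous_dquot r u v : r < R0 -> Cmod (u - z1) <= r -> Cmod (v - z1) <= r ->
  seg_continuous dquot u v.
Proof.
  intros Hr Hu Hv s Hs. apply dquot_continuous_at. eapply Rle_lt_trans; [| apply Hr].
  apply Cmod_lerp_minus_max; auto.
Qed.

Lemma tri_int_dquot_cut r z0 w s : r < R0 -> Cmod (z0 - z1) <= r -> Cmod (w - z1) <= r -> 0 <= s <= 1 ->
  tri_int dquot z1 z0 w =
  (tri_int dquot z1 (lerp z1 z0 s) (lerp z1 w s) + tri_int dquot (lerp z1 z0 s) z0 w
   + tri_int dquot (lerp z1 z0 s) w (lerp z1 w s))%C.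
Proof.
  intros Hr Hz0 Hw Hs.
  assert (Hz1 : Cmod (z1 - z1) <= r) by (rewrite Cmod_minus_self; generalize (Cmod_ge_0 (z0 - z1)); lra).
  assert (Hu : Cmod (lerp z1 z0 s - z1) <= r) by (apply Cmod_lerp_minus_max; auto).
  assert (Hv : Cmod (lerp z1 w s - z1) <= r) by (apply Cmod_lerp_minus_max; auto).
  assert (Ev : lerp w z1 (1 - s) = lerp z1 w s) by (unfold lerp; rewrite RtoC_minus; ring).
  unfold tri_int.
  rewrite (seg_int_split dquot z1 z0 s), (seg_int_split dquot w z1 (1 - s))
    by (try lra; apply (seg_continuous_dquot r); auto).
  rewrite Ev, (seg_int_rev dquot (lerp z1 z0 s) (lerp z1 w s)), (seg_int_rev dquot (lerp z1 z0 s) w)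
    by (apply (seg_continuous_dquot r); auto).
  ring.
Qed.

Lemma tri_int_dquot_near_center_bound : exists del M, 0 < del /\ 0 < M /\
  forall a b c, Cmod (a - z1) < del -> Cmod (b - z1) < del -> Cmod (c - z1) < del ->
  Cmod (tri_int dquot a b c) <= 2 * M * (Cmod (b - a) + Cmod (c - b) + Cmod (a - c)).
Proof.
  destruct (dquot_continuous_at_center 1 Rlt_0_1) as [del [Hdel Hphi]].
  set (M := Cmod (dquot z1) + 1).
  assert (HM : 0 < M) by (unfold M; generalize (Cmod_ge_0 (dquot z1)); lra).
  set (del' := Rmin del R0).
  assert (Hbnd : forall u v t, 0 <= t <= 1 -> Cmod (u - z1) < del' -> Cmod (v - z1) < del' ->
    Cmod (dquot (lerp u v t)) <= M).
  { intros u v t Ht Hu Hv. unfold M.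
    replace (dquot (lerp u v t)) with ((dquot (lerp u v t) - dquot z1) + dquot z1)%C by ring.
    assert (Hl : Cmod (lerp u v t - z1) < del).
    { eapply Rle_lt_trans; [apply (Cmod_lerp_minus_max u v z1 (Rmax (Cmod (u - z1)) (Cmod (v - z1)))) |];
        auto using Rmax_l, Rmax_r.
      apply Rmax_lub_lt; eapply Rlt_le_trans; eauto; apply Rmin_l. }
    generalize (Hphi _ Hl) (Cmod_triangle (dquot (lerp u v t) - dquot z1) (dquot z1)). lra. }
  assert (Hsc : forall u v, Cmod (u - z1) < del' -> Cmod (v - z1) < del' -> seg_continuous dquot u v).
  { intros u v Hu Hv. apply (seg_continuous_dquot (Rmax (Cmod (u - z1)) (Cmod (v - z1))));
      auto using Rmax_l, Rmax_r.
    apply Rmax_lub_lt; eapply Rlt_le_trans; eauto; apply Rmin_r. }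
  assert (Hdel' : 0 < del') by (apply Rmin_pos; auto).
  exists del', M. repeat split; auto.
  intros a b c Ha Hb Hc. unfold tri_int. eapply Rle_trans. apply Cmod_triangle3.
  generalize (seg_int_bound dquot a b M (Hsc a b Ha Hb) (fun t Ht => Hbnd a b t Ht Ha Hb))
    (seg_int_bound dquot b c M (Hsc b c Hb Hc) (fun t Ht => Hbnd b c t Ht Hb Hc))
    (seg_int_bound dquot c a M (Hsc c a Hc Ha) (fun t Ht => Hbnd c a t Ht Hc Ha)).
  lra.
Qed.

(** Away from its tip [z1], the triangle lies in a closed half-disc orthogonal to
    [z0 - z1] that avoids [z1]; there Goursat applies. *)
Lemma tri_int_dquot_off_center r z0 w s : r < R0 -> 0 < Cmod (z0 - z1) -> Cmod (w - z0) < Cmod (z0 - z1) ->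
  Cmod (z0 - z1) <= r -> Cmod (w - z1) <= r -> 0 < s <= 1 ->
  tri_int dquot (lerp z1 z0 s) z0 w = 0%C /\ tri_int dquot (lerp z1 z0 s) w (lerp z1 w s) = 0%C.
Proof.
  intros Hr Hz0 Hwz0 Hz0r Hwr Hs.
  set (c := Cconj (z0 - z1)).
  set (kap := Cmod (z0 - z1) ^ 2 - Cmod (w - z0) * Cmod (z0 - z1)).
  assert (Hkap : 0 < kap) by (unfold kap; nra).
  assert (Fz0 : fst ((z0 - z1) * c)%C = Cmod (z0 - z1) ^ 2) by (unfold c; rewrite <- Cmod2_conj; reflexivity).
  assert (Fw : kap <= fst ((w - z1) * c)%C).
  { assert (E : fst ((w - z1) * c)%C = fst ((z0 - z1) * c)%C + fst ((w - z0) * c)%C) by (simpl; ring).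
    generalize (re_le_Cmod ((w - z0) * c)%C). unfold Re. rewrite Cmod_mult. intro H.
    replace (Cmod c) with (Cmod (z0 - z1)) in H by (unfold c; rewrite Cmod_conj; auto).
    apply Rabs_le_inv in H. unfold kap. lra. }
  assert (Hkap_le : kap <= Cmod (z0 - z1) ^ 2) by (unfold kap; generalize (Cmod_ge_0 (w - z0)); nra).
  set (K := half_disc z1 c r (s * kap)).
  assert (K_derivable : forall x, K x -> C_derivable_at dquot x).
  { intros x [Hx1 Hx2]. apply dquot_derivable_at; [| lra]. intros ->.
    replace ((z1 - z1) * c)%C with (RtoC 0) in Hx2 by ring. simpl in Hx2. nra. }
  assert (K_lerp : forall x, Cmod (x - z1) <= r -> kap <= fst ((x - z1) * c)%C -> K (lerp z1 x s)).
  { intros x Hx1 Hx2. split.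
    - replace (lerp z1 x s - z1)%C with (RtoC s * (x - z1))%C by (unfold lerp; ring).
      rewrite Cmod_RtoC_mult, Rabs_pos_eq; nra.
    - replace (fst ((lerp z1 x s - z1) * c)%C) with (s * fst ((x - z1) * c)%C) by (unfold lerp; simpl; ring).
      nra. }
  assert (Kz0 : K z0) by (split; auto; nra).
  assert (Kw : K w) by (split; auto; nra).
  assert (Ku : K (lerp z1 z0 s)) by (apply K_lerp; lra).
  assert (Kv : K (lerp z1 w s)) by (apply K_lerp; lra).
  split; apply (goursat K (half_disc_convex z1 c r _) (half_disc_closed z1 c r _) dquot K_derivable); auto.
Qed.

(** Cutting off the tip at ratio [s] leaves a triangle of integral [O(s)], since [dquot]
    is bounded near [z1]. *)
Lemma tri_int_dquot_vertex_le r z0 w : r < R0 -> 0 < Cmod (z0 - z1) -> Cmod (w - z0) < Cmod (z0 - z1) ->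
  Cmod (z0 - z1) <= r -> Cmod (w - z1) <= r -> exists del M, 0 < del /\
  forall s, 0 < s <= 1 -> s * r < del -> Cmod (tri_int dquot z1 z0 w) <= 8 * M * r * s.
Proof.
  intros Hr Hz0 Hwz0 Hz0r Hwr.
  destruct tri_int_dquot_near_center_bound as [del [M [Hdel [HM Hsmall]]]].
  exists del, M. split; auto. intros s Hs Hsd.
  assert (Hscale : forall x, Cmod (lerp z1 x s - z1) = s * Cmod (x - z1)).
  { intro x. replace (lerp z1 x s - z1)%C with (RtoC s * (x - z1))%C by (unfold lerp; ring).
    rewrite Cmod_RtoC_mult, Rabs_pos_eq; lra. }
  assert (Nuv : Cmod (lerp z1 w s - lerp z1 z0 s) = s * Cmod (w - z0)).
  { replace (lerp z1 w s - lerp z1 z0 s)%C with (RtoC s * (w - z0))%C by (unfold lerp; ring).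
    rewrite Cmod_RtoC_mult, Rabs_pos_eq; lra. }
  assert (Hwz0r : Cmod (w - z0) <= 2 * r).
  { eapply Rle_trans. apply Cmod_dist_triangle with (b := z1). rewrite (Cmod_minus_sym z1 z0). lra. }
  destruct (tri_int_dquot_off_center r z0 w s) as [E1 E2]; auto.
  rewrite (tri_int_dquot_cut r z0 w s), E1, E2, !Cplus_0_r by (auto; lra).
  eapply Rle_trans. apply Hsmall.
  - rewrite Cmod_minus_self. lra.
  - rewrite Hscale. nra.
  - rewrite Hscale. nra.
  - rewrite Hscale, Nuv, (Cmod_minus_sym z1 (lerp z1 w s)), Hscale.
    apply Rle_trans with (2 * M * (s * (4 * r))); [| lra].
    apply Rmult_le_compat_l; nra.
Qed.

Lemma tri_int_dquot_vertex r z0 w : r < R0 -> 0 < Cmod (z0 - z1) -> Cmod (w - z0) < Cmod (z0 - z1) ->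
  Cmod (z0 - z1) <= r -> Cmod (w - z1) <= r -> tri_int dquot z1 z0 w = 0%C.
Proof.
  intros Hr Hz0 Hwz0 Hz0r Hwr.
  assert (Hr0 : 0 <= r) by (generalize (Cmod_ge_0 (z0 - z1)); lra).
  destruct (tri_int_dquot_vertex_le r z0 w) as [del [M [Hdel Hcut]]]; auto.
  apply Cmod_eq_0, Rle_antisym; [| apply Cmod_ge_0].
  set (s0 := Rmin 1 (del / (2 * (r + 1)))).
  assert (Hs0 : 0 < s0) by (apply Rmin_pos; [lra | apply Rdiv_lt_0_compat; lra]).
  assert (Hs0r : s0 * r < del).
  { apply Rle_lt_trans with (del / (2 * (r + 1)) * r). apply Rmult_le_compat_r; auto. apply Rmin_r.
    apply Rmult_lt_reg_r with (2 * (r + 1)). lra.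
    replace (del / (2 * (r + 1)) * r * (2 * (r + 1))) with (del * r) by (field; lra). nra. }
  apply (Rle_0_of_le_small_mult _ (8 * M * r * s0)). intros eps Heps.
  replace (eps * (8 * M * r * s0)) with (8 * M * r * (eps * s0)) by ring.
  apply Hcut.
  - split. nra. generalize (Rmin_l 1 (del / (2 * (r + 1)))). fold s0. nra.
  - assert (0 <= s0 * r) by (apply Rmult_le_pos; lra). nra.
Qed.

Definition dquot_primitive (z : C) : C := seg_int dquot z1 z.

Lemma dquot_primitive_derivable r z0 : r < R0 -> 0 < Cmod (z0 - z1) < r ->
  C_derivable_pt_lim dquot_primitive z0 (dquot z0).
Proof.
  intros Hr [H0 H1] eps Heps.
  destruct (dquot_continuous_at z0 ltac:(lra) (eps / 2)) as [d0 [Hd0 Hc]]. lra.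
  exists (Rmin d0 (Rmin (Cmod (z0 - z1)) (r - Cmod (z0 - z1)))). split.
  { repeat apply Rmin_pos; lra. }
  intros w Hw.
  assert (Hw0 := Rlt_le_trans _ _ _ Hw (Rmin_l _ _)).
  assert (Hw1 := Rlt_le_trans _ _ _ Hw (Rle_trans _ _ _ (Rmin_r _ _) (Rmin_l _ _))).
  assert (Hw2 := Rlt_le_trans _ _ _ Hw (Rle_trans _ _ _ (Rmin_r _ _) (Rmin_r _ _))).
  assert (Hwz1 : Cmod (w - z1) <= r) by (generalize (Cmod_dist_triangle w z0 z1); lra).
  assert (Hz1 : Cmod (z1 - z1) <= r) by (rewrite Cmod_minus_self; lra).
  assert (Et := tri_int_dquot_vertex r z0 w Hr H0 Hw1 ltac:(lra) Hwz1).
  unfold tri_int in Et. rewrite (seg_int_rev _ z1 w) in Et by (apply (seg_continuous_dquot r); auto).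
  assert (E : (dquot_primitive w - dquot_primitive z0 - dquot z0 * (w - z0))%C =
              seg_int (fun z => dquot z - dquot z0)%C z0 w).
  { rewrite seg_int_minus, seg_int_const.
    - unfold dquot_primitive.
      replace (seg_int dquot z1 w) with (seg_int dquot z1 z0 + seg_int dquot z0 w -
        (seg_int dquot z1 z0 + seg_int dquot z0 w + - seg_int dquot z1 w))%C by ring.
      rewrite Et. ring.
    - apply (seg_continuous_dquot r); lra.
    - intros s _ e He. exists 1. split. lra. intros. rewrite Cmod_minus_self. auto. }
  rewrite E. replace (eps * Cmod (w - z0)) with (2 * (eps / 2) * Cmod (w - z0)) by field.
  apply seg_int_bound.
  - intros s Hs. apply C_continuous_at_minus_const. apply (seg_continuous_dquot r); auto. lra.
  - intros s Hs. left. apply Hc. eapply Rle_lt_trans. apply Cmod_lerp_minus_le; auto.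
    rewrite Cmod_minus_self. generalize (Cmod_ge_0 (w - z0)). nra.
Qed.

(** Mean value property: [-i u dquot_primitive] composed with the circle is a primitive of
    [t |-> u f (circle t) - u f z1], and it is [2 PI]-periodic. *)
Lemma RInt_circle_mean_value r rho u : r < R0 -> 0 < Cmod rho < r ->
  RInt (fun t => fst (u * f (circle z1 rho t))%C) 0 (2 * PI) = 2 * PI * fst (u * f z1)%C.
Proof.
  intros Hr [Hr0 Hr1].
  set (c := (- Ci * u)%C).
  set (H := fun t => fst (c * dquot_primitive (circle z1 rho t))%C).
  set (df := fun t => fst (u * f (circle z1 rho t) - u * f z1)%C).
  assert (Hm := Cmod_circle_minus_center z1 rho).
  assert (Hne : forall t, (circle z1 rho t - z1)%C <> 0%C) by (intro t; apply Cmod_gt_0; rewrite Hm; auto).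
  assert (Hder : forall t, is_derive H t (df t)).
  { intros t. apply is_derive_Reals.
    assert (E : (c * dquot (circle z1 rho t) * (rho * ((- sin t)%R, cos t)))%C = (u * f (circle z1 rho t) - u * f z1)%C).
    { unfold dquot. destruct (Ceq_dec (circle z1 rho t) z1) as [E | _].
      { exfalso. apply (Hne t). rewrite E. ring. }
      replace (rho * ((- sin t)%R, cos t))%C with (Ci * (circle z1 rho t - z1))%C
        by (unfold circle; apply injective_projections; simpl; ring).
      unfold c. field_simplify; [| apply Hne].
      apply injective_projections; simpl; ring. }
    unfold df, H. rewrite <- E. apply (path_derivable_pt_lim_fst (fun s => c * dquot_primitive (circle z1 rho s))%C).
    apply (path_derivable_pt_lim_comp (fun z => c * dquot_primitive z)%C (circle z1 rho)).
    - apply C_derivable_pt_lim_scal, (dquot_primitive_derivable r); auto. rewrite Hm. lra.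
    - apply path_derivable_pt_lim_circle. }
  assert (Hcont : forall t, continuous df t).
  { intros t. unfold df. apply (continuous_of_path_continuous_at fst (fun s => (u * f (circle z1 rho s) - u * f z1)%C));
      [apply Rabs_fst_minus_le |].
    apply (path_continuous_at_comp (fun z => u * f z - u * f z1)%C (circle z1 rho) t _ (path_derivable_pt_lim_circle z1 rho t)).
    apply C_continuous_at_minus_const, C_continuous_at_scal, C_derivable_at_continuous, f_derivable_ball.
    rewrite Hm. lra. }
  assert (HI := is_RInt_derive (V := R_CompleteNormedModule) H df 0 (2 * PI) (fun t _ => Hder t) (fun t _ => Hcont t)).
  replace (H (2 * PI)) with (H 0) in HI by (unfold H, circle; rewrite cos_2PI, sin_2PI, cos_0, sin_0; reflexivity).
  rewrite minus_R, Rminus_diag in HI. apply is_RInt_unique in HI.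
  rewrite (RInt_ext _ (fun t => plus (df t) (fst (u * f z1)%C))) by (intros x _; unfold df; rewrite plus_R; simpl; ring).
  rewrite (RInt_plus (V := R_CompleteNormedModule)).
  - rewrite HI, RInt_const. cbn -[PI fst Cmult]. ring.
  - apply (ex_RInt_continuous (V := R_CompleteNormedModule)). intros; apply Hcont.
  - apply ex_RInt_const.
Qed.

End DifferenceQuotient.

(** * The maximum modulus principle *)

Lemma RInt_nonneg_eq_0_at_left (g : R -> R) (a b : R) : a < b ->
  (forall t, a <= t <= b -> continuous g t) -> (forall t, a <= t <= b -> 0 <= g t) ->
  RInt g a b = 0 -> g a = 0.
Proof.
  intros Hab Hc Hg HI. apply Rle_antisym; [| apply Hg; lra]. apply Rnot_lt_le. intro Hpos.
  assert (Hca : continuity_pt g a) by (apply continuity_pt_filterlim, Hc; lra).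
  destruct (Hca (g a / 2) ltac:(lra)) as [del [Hdel Hs]].
  set (eta := Rmin (del / 2) (b - a)).
  assert (Heta : 0 < eta) by (apply Rmin_pos; lra).
  assert (Heta_del : eta < del) by (generalize (Rmin_l (del / 2) (b - a)); fold eta; lra).
  assert (Heta_b : a + eta <= b) by (generalize (Rmin_r (del / 2) (b - a)); fold eta; lra).
  assert (Hex : forall x y, a <= x <= b -> a <= y <= b -> ex_RInt g x y).
  { intros x y Hx Hy. apply (ex_RInt_continuous (V := R_CompleteNormedModule)). intros z Hz. apply Hc.
    split. apply Rle_trans with (Rmin x y). apply Rmin_glb; lra. lra.
    apply Rle_trans with (Rmax x y). lra. apply Rmax_lub; lra. }
  assert (Hpos1 : 0 < RInt g a (a + eta)).
  { apply RInt_gt_0; [lra | | intros; apply Hc; lra]. intros x Hx.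
    assert (Hx' : R_dist x a < del) by (unfold R_dist; rewrite Rabs_pos_eq; lra).
    assert (Hxa : a <> x) by lra.
    specialize (Hs x (conj (conj I Hxa) Hx')). unfold R_dist in Hs. apply Rabs_def2 in Hs. lra. }
  assert (Hpos2 : 0 <= RInt g (a + eta) b).
  { apply RInt_ge_0; [lra | apply Hex; lra | intros; apply Hg; lra]. }
  rewrite <- (RInt_Chasles (V := R_CompleteNormedModule) g a (a + eta) b) in HI by (apply Hex; lra).
  rewrite plus_R in HI. lra.
Qed.

Lemma unit_interval_induction (P : R -> Prop) : P 0 ->
  (forall t, 0 < t <= 1 -> (forall s, 0 <= s < t -> P s) -> P t) ->
  (forall t, 0 <= t < 1 -> P t -> exists eta, 0 < eta /\ forall s, t <= s <= t + eta -> P s) ->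
  P 1.
Proof.
  intros H0 Hsup Hopen.
  set (E := fun t => 0 <= t <= 1 /\ forall s, 0 <= s <= t -> P s).
  assert (HE0 : E 0) by (split; [lra | intros s Hs; replace s with 0 by lra; auto]).
  assert (Hb : bound E) by (exists 1; intros x [Hx _]; lra).
  destruct (completeness E Hb (ex_intro _ 0 HE0)) as [T [HT1 HT2]].
  assert (T0 : 0 <= T) by (apply HT1; auto).
  assert (T1 : T <= 1) by (apply HT2; intros x [Hx _]; lra).
  assert (Hbelow : forall s, 0 <= s < T -> P s).
  { intros s Hs. destruct (classic (exists x, E x /\ s < x)) as [[x [[_ Hx] Hsx]] | Hn].
    - apply Hx. lra.
    - exfalso. assert (Hub : is_upper_bound E s).
      { intros x Hx. apply Rnot_lt_le. intro Hlt. apply Hn. exists x; auto. }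
      generalize (HT2 s Hub). lra. }
  assert (HT : P T) by (destruct (Req_dec T 0) as [-> | ?]; auto; apply Hsup; auto; lra).
  destruct (Req_dec T 1) as [<- | HT1']; auto.
  destruct (Hopen T ltac:(lra) HT) as [eta [Heta Hs]].
  set (eta' := Rmin eta (1 - T)).
  assert (Heta' : 0 < eta') by (apply Rmin_pos; lra).
  assert (HE : E (T + eta')).
  { split. generalize (Rmin_r eta (1 - T)). fold eta'. lra.
    intros s Hs'. destruct (Rlt_le_dec s T).
    - apply Hbelow. lra.
    - apply Hs. generalize (Rmin_l eta (1 - T)). fold eta'. lra. }
  generalize (HT1 _ HE). lra.
Qed.

Lemma ball_subset_disc z1 z : Cmod (z - z1) < 1 - Cmod z1 -> Cmod z < 1.
Proof.
  intros H. generalize (Cmod_triangle (z - z1) z1). replace (z - z1 + z1)%C with z by ring. lra.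
Qed.

Lemma Cmod_lerp_lt_1 z l t : Cmod z <= 1 -> Cmod l < 1 -> 0 < t <= 1 -> Cmod (lerp z l t) < 1.
Proof.
  intros Hz Hl Ht. generalize (Cmod_lerp_minus_le z l 0 t ltac:(lra)).
  replace (lerp z l t - 0)%C with (lerp z l t) by ring.
  replace (z - 0)%C with z by ring. replace (l - 0)%C with l by ring. nra.
Qed.

Section MaximumModulus.

Variable f : C -> C.
Hypothesis f_derivable : forall z, Cmod z < 1 -> C_derivable_at f z.
Hypothesis f_bound : forall z, Cmod z < 1 -> Cmod (f z) <= 1.

(** If [|f z1| = 1], the mean of the nonnegative function [1 - Re (conj (f z1) f)] over
    every small circle around [z1] vanishes, so it vanishes on the circle. *)
Lemma Cmod_eq_1_nbhd z1 : Cmod z1 < 1 -> Cmod (f z1) = 1 ->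
  exists r, 0 < r /\ forall rho, Cmod rho < r -> Cmod (f (z1 + rho)) = 1.
Proof.
  intros Hz1 Hf1. set (R0 := 1 - Cmod z1). assert (HR0 : 0 < R0) by (unfold R0; lra).
  destruct (f_derivable z1 Hz1) as [d1 Hd1].
  assert (Fd : forall z, Cmod (z - z1) < R0 -> C_derivable_at f z)
    by (intros z Hz; apply f_derivable, (ball_subset_disc z1); auto).
  exists (R0 / 2). split. lra. intros rho Hrho.
  destruct (Req_dec (Cmod rho) 0) as [E0 | E0].
  { apply Cmod_eq_0 in E0. rewrite E0, Cplus_0_r. auto. }
  assert (Hr : 0 < Cmod rho) by (generalize (Cmod_ge_0 rho); lra).
  set (u := Cconj (f z1)).
  assert (Hu : Cmod u = 1) by (unfold u; rewrite Cmod_conj; auto).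
  assert (Hfu : fst (u * f z1)%C = 1) by (unfold u; rewrite Cmult_comm, <- Cmod2_conj, Hf1; simpl; ring).
  assert (Hin : forall t, Cmod (circle z1 rho t) < 1).
  { intros t. apply (ball_subset_disc z1). rewrite Cmod_circle_minus_center. fold R0. lra. }
  set (g := fun t => 1 - fst (u * f (circle z1 rho t))%C).
  assert (Hg0 : g 0 = 0).
  { apply (RInt_nonneg_eq_0_at_left g 0 (2 * PI)).
    - generalize PI_RGT_0. lra.
    - intros t _. apply (continuous_of_path_continuous_at (fun z => 1 - fst z)).
      { intros a b. replace (1 - fst a - (1 - fst b)) with (- (fst a - fst b)) by ring.
        rewrite Rabs_Ropp. apply Rabs_fst_minus_le. }
      apply (path_continuous_at_comp (fun z => u * f z)%C (circle z1 rho) t _ (path_derivable_pt_lim_circle z1 rho t)).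
      apply C_continuous_at_scal, C_derivable_at_continuous, f_derivable, Hin.
    - intros t _. unfold g. generalize (fst_le_Cmod (u * f (circle z1 rho t))%C).
      rewrite Cmod_mult, Hu. generalize (f_bound _ (Hin t)). lra.
    - unfold g. rewrite (RInt_minus (V := R_CompleteNormedModule) (fun _ => 1)), minus_R, RInt_const.
      + rewrite (RInt_circle_mean_value z1 R0 f d1 HR0 Fd Hd1 (3 * R0 / 4) rho u) by lra.
        rewrite Hfu. cbn -[PI]. ring.
      + apply ex_RInt_const.
      + apply (ex_RInt_continuous (V := R_CompleteNormedModule)). intros t _.
        apply (continuous_of_path_continuous_at fst); [apply Rabs_fst_minus_le |].
        apply (path_continuous_at_comp (fun z => u * f z)%C (circle z1 rho) t _ (path_derivable_pt_lim_circle z1 rho t)).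
        apply C_continuous_at_scal, C_derivable_at_continuous, f_derivable, Hin. }
  unfold g, circle in Hg0. rewrite cos_0, sin_0 in Hg0.
  replace (z1 + rho * (1, 0))%C with (z1 + rho)%C in Hg0 by (apply injective_projections; simpl; ring).
  apply Rle_antisym.
  - apply f_bound, (ball_subset_disc z1). replace (z1 + rho - z1)%C with rho by ring. fold R0. lra.
  - generalize (fst_le_Cmod (u * f (z1 + rho))%C). rewrite Cmod_mult, Hu. lra.
Qed.

Theorem Cmod_lt_1_of_Cmod_lt_1_at l0 : Cmod l0 < 1 -> Cmod (f l0) < 1 ->
  forall z, Cmod z < 1 -> Cmod (f z) < 1.
Proof.
  intros Hl0 Hfl0 z Hz. apply Rnot_le_lt. intro Hge.
  set (p := lerp z l0).
  assert (Hp : forall t, 0 <= t <= 1 -> Cmod (p t) < 1).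
  { intros t Ht. destruct (Req_dec t 0) as [-> | ?].
    - unfold p. rewrite lerp_0. auto.
    - apply Cmod_lerp_lt_1; auto; lra. }
  cut (Cmod (f (p 1)) = 1). { unfold p. rewrite lerp_1. lra. }
  apply (unit_interval_induction (fun t => Cmod (f (p t)) = 1)).
  - unfold p. rewrite lerp_0. generalize (f_bound z Hz). lra.
  - intros t Ht Hbelow. apply Rle_antisym; [apply f_bound, Hp; lra |]. apply Rnot_lt_le. intro Hlt.
    assert (Hc : path_continuous_at (fun s => f (p s)) t).
    { apply (path_continuous_at_comp f p t (l0 - z)%C (path_derivable_pt_lim_lerp z l0 t)).
      apply C_derivable_at_continuous, f_derivable, Hp. lra. }
    destruct (Hc (1 - Cmod (f (p t)))) as [del [Hdel Hs]]. lra.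
    set (s := Rmax 0 (t - del / 2)).
    assert (Hs1 : 0 <= s < t) by (unfold s; split; [apply Rmax_l | apply Rmax_lub_lt; lra]).
    assert (Hs2 : Rabs (s - t) < del).
    { rewrite Rabs_left by lra. unfold s. generalize (Rmax_r 0 (t - del / 2)). lra. }
    specialize (Hs s Hs2).
    generalize (Cmod_reverse_triangle (f (p s)) (f (p t))). rewrite (Hbelow s Hs1). lra.
  - intros t Ht Hpt.
    destruct (Cmod_eq_1_nbhd (p t) (Hp t ltac:(lra)) Hpt) as [r [Hr Hopen]].
    set (eta := r / (2 * (Cmod (l0 - z) + 1))).
    assert (Hq : 0 < 2 * (Cmod (l0 - z) + 1)) by (generalize (Cmod_ge_0 (l0 - z)); lra).
    exists eta. split. apply Rdiv_lt_0_compat; lra.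
    intros s Hs.
    replace (p s) with (p t + RtoC (s - t) * (l0 - z))%C by (unfold p, lerp; rewrite RtoC_minus; ring).
    apply Hopen. rewrite Cmod_RtoC_mult, Rabs_pos_eq by lra.
    apply Rle_lt_trans with (eta * Cmod (l0 - z)).
    + apply Rmult_le_compat_r. apply Cmod_ge_0. lra.
    + unfold eta. apply Rmult_lt_reg_r with (2 * (Cmod (l0 - z) + 1)); auto.
      replace (r / (2 * (Cmod (l0 - z) + 1)) * Cmod (l0 - z) * (2 * (Cmod (l0 - z) + 1))) with
        (r * Cmod (l0 - z)) by (field; lra).
      generalize (Cmod_ge_0 (l0 - z)). nra.
Qed.

End MaximumModulus.

(** * The pair inequalities *)

Definition Cnorm2 (x : C) : R := fst x ^ 2 + snd x ^ 2.

Lemma Cmod_sqr_Cnorm2 x : Cmod x ^ 2 = Cnorm2 x.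
Proof. rewrite Cmod2_alt. reflexivity. Qed.

Lemma Cmod_lt_Cnorm2 x y : Cmod x < Cmod y <-> Cnorm2 x < Cnorm2 y.
Proof. rewrite <- !Cmod_sqr_Cnorm2. generalize (Cmod_ge_0 x) (Cmod_ge_0 y). intros. split; intro; nra. Qed.

Lemma Cmod_le_Cnorm2 x y : Cmod x <= Cmod y <-> Cnorm2 x <= Cnorm2 y.
Proof. rewrite <- !Cmod_sqr_Cnorm2. generalize (Cmod_ge_0 x) (Cmod_ge_0 y). intros. split; intro; nra. Qed.

Lemma Cnorm2_unit x : Cmod x = 1 -> Cnorm2 x = 1.
Proof. intros H. rewrite <- Cmod_sqr_Cnorm2, H. ring. Qed.

Lemma Cconj_mult_unit (u : C) : Cmod u = 1 -> (Cconj u * u)%C = RtoC 1.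
Proof.
  intros H. assert (E := Cnorm2_unit u H). unfold Cnorm2 in E.
  apply injective_projections; simpl; nra.
Qed.

Lemma Cmod_lt_1_sqr q : Cmod q < 1 -> 0 < 1 - Cmod q ^ 2.
Proof. intros H. generalize (Cmod_ge_0 q). nra. Qed.

Lemma polar_decomposition (x : C) : exists u, Cmod u = 1 /\ x = (u * RtoC (Cmod x))%C.
Proof.
  destruct (Ceq_dec x 0) as [E | E].
  - exists (RtoC 1). split. apply Cmod_1. rewrite E, Cmod_0. ring.
  - assert (Hp : 0 < Cmod x) by (apply Cmod_gt_0; auto).
    exists (x * RtoC (/ Cmod x))%C. split.
    + rewrite Cmod_mult, Cmod_R, Rabs_pos_eq by (left; apply Rinv_0_lt_compat; auto). field. lra.
    + apply injective_projections; simpl; field; lra.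
Qed.

Lemma exists_rotation_Re_eq_sum (A B : C) : exists om zz, Cmod om = 1 /\ Cmod zz = 1 /\
  fst (zz * (A + om * B))%C = Cmod A + Cmod B.
Proof.
  destruct (polar_decomposition A) as [ua [Ha EA]]. destruct (polar_decomposition B) as [ub [Hb EB]].
  exists (ua * Cconj ub)%C, (Cconj ua). split; [| split].
  - rewrite Cmod_mult, Cmod_conj, Ha, Hb. ring.
  - rewrite Cmod_conj; auto.
  - set (mA := Cmod A) in *. set (mB := Cmod B) in *. rewrite EA, EB.
    replace (Cconj ua * (ua * RtoC mA + ua * Cconj ub * (ub * RtoC mB)))%C with
      ((Cconj ua * ua) * (RtoC mA + (Cconj ub * ub) * RtoC mB))%C by ring.
    rewrite !Cconj_mult_unit by auto. simpl. ring.
Qed.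

(** [pair_defect (y j) (y (n - j)) q] is [(1 - |q|^2) beta_j] when [y] is given by [beta]. *)
Definition pair_defect (y1 y2 q : C) : C := (y1 - Cconj y2 * q)%C.

Definition pair_sum (y1 y2 q : C) : R := Cmod (pair_defect y1 y2 q) + Cmod (pair_defect y2 y1 q).

Lemma pair_defect_beta (bj bk q : C) :
  pair_defect (bj + Cconj bk * q) (bk + Cconj bj * q) q = (bj * RtoC (1 - Cnorm2 q))%C.
Proof. destruct bj, bk, q. unfold pair_defect, Cnorm2. apply injective_projections; simpl; ring. Qed.

Definition moebius_test (c : R) (y1 y2 q zz om : C) : C :=
  ((RtoC (2 * c) * zz * om * q - (y1 + om * y2)) / (RtoC (2 * c) - zz * (y1 + om * y2)))%C.

Lemma moebius_test_gap_identity (c : R) (y1 y2 q zz om : C) :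
  Cnorm2 (RtoC (2 * c) - zz * (y1 + om * y2))%C - Cnorm2 (RtoC (2 * c) * zz * om * q - (y1 + om * y2))%C =
  4 * c ^ 2 * (1 - Cnorm2 q) - 4 * c * fst (zz * (pair_defect y1 y2 q + om * pair_defect y2 y1 q))%C
  + (Cnorm2 zz - 1) * (Cnorm2 (y1 + om * y2)%C - 4 * c ^ 2 * Cnorm2 q * Cnorm2 om)
  + (Cnorm2 om - 1) * (- 4 * c ^ 2 * Cnorm2 q + 4 * c * fst (zz * q * Cconj y2)%C).
Proof.
  destruct y1 as [a1 a2], y2 as [b1 b2], q as [q1 q2], zz as [z1 z2], om as [w1 w2].
  unfold Cnorm2, pair_defect. simpl. ring.
Qed.

Section MoebiusTest.

Variables (c : R) (y1 y2 q zz om : C).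
Hypothesis c_pos : 0 < c.
Hypothesis zz_unit : Cmod zz = 1.
Hypothesis om_unit : Cmod om = 1.
Hypothesis q_in_disc : Cmod q < 1.
Hypothesis pair_le : pair_sum y1 y2 q <= c * (1 - Cmod q ^ 2).

Let w := (y1 + om * y2)%C.
Let num := (RtoC (2 * c) * zz * om * q - w)%C.
Let den := (RtoC (2 * c) - zz * w)%C.

Let Re_rot := fst (zz * (pair_defect y1 y2 q + om * pair_defect y2 y1 q))%C.

Lemma Re_rot_le_pair_sum : Re_rot <= pair_sum y1 y2 q.
Proof.
  unfold Re_rot, pair_sum. eapply Rle_trans. apply fst_le_Cmod.
  rewrite Cmod_mult, zz_unit, Rmult_1_l. eapply Rle_trans. apply Cmod_triangle.
  rewrite Cmod_mult, om_unit. lra.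
Qed.

Lemma moebius_test_den_neq_0 : den <> 0%C.
Proof.
  assert (E : (w - om * q * Cconj w)%C = (pair_defect y1 y2 q + om * pair_defect y2 y1 q)%C).
  { unfold w, pair_defect. rewrite Cplus_conj, Cmult_conj.
    replace (y1 + om * y2 - om * q * (Cconj y1 + Cconj om * Cconj y2))%C with
      (y1 - Cconj y2 * q * (Cconj om * om) + om * (y2 - Cconj y1 * q))%C by ring.
    rewrite Cconj_mult_unit by auto. ring. }
  assert (H1 : Cmod (pair_defect y1 y2 q + om * pair_defect y2 y1 q) <= c * (1 - Cmod q ^ 2)).
  { eapply Rle_trans. apply Cmod_triangle. rewrite Cmod_mult, om_unit. unfold pair_sum in pair_le. lra. }
  assert (H2 : Cmod w * (1 - Cmod q) <= Cmod (w - om * q * Cconj w)).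
  { generalize (Cmod_reverse_triangle w (om * q * Cconj w)). rewrite !Cmod_mult, om_unit, Cmod_conj. lra. }
  rewrite E in H2.
  assert (Hw : Cmod w < 2 * c).
  { generalize (Cmod_ge_0 q). intro.
    assert (Cmod w * (1 - Cmod q) <= c * (1 + Cmod q) * (1 - Cmod q)) by nra.
    assert (Cmod w <= c * (1 + Cmod q)) by (apply Rmult_le_reg_r with (1 - Cmod q); lra). nra. }
  intro E0. unfold den in E0.
  assert (E1 : RtoC (2 * c) = (zz * w)%C).
  { replace (RtoC (2 * c)) with (RtoC (2 * c) - zz * w + zz * w)%C by ring. rewrite E0. ring. }
  apply (f_equal Cmod) in E1. rewrite Cmod_mult, zz_unit, Cmod_R, Rabs_pos_eq in E1 by lra. lra.
Qed.

Lemma moebius_test_gap : Cnorm2 den - Cnorm2 num = 4 * c * (c * (1 - Cmod q ^ 2) - Re_rot).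
Proof.
  unfold den, num, w, Re_rot. rewrite moebius_test_gap_identity.
  rewrite (Cnorm2_unit zz zz_unit), (Cnorm2_unit om om_unit), <- Cmod_sqr_Cnorm2. ring.
Qed.

Lemma Cmod_moebius_test_lt_1_iff : Cmod (moebius_test c y1 y2 q zz om) < 1 <-> Re_rot < c * (1 - Cmod q ^ 2).
Proof.
  assert (Hd : 0 < Cmod den) by (apply Cmod_gt_0, moebius_test_den_neq_0).
  unfold moebius_test. fold w num den.
  rewrite Cmod_div, Rdiv_lt_1_iff, Cmod_lt_Cnorm2 by (auto || apply moebius_test_den_neq_0).
  generalize moebius_test_gap. split; intro; nra.
Qed.

Lemma Cmod_moebius_test_le_1 : Cmod (moebius_test c y1 y2 q zz om) <= 1.
Proof.
  assert (Hd : 0 < Cmod den) by (apply Cmod_gt_0, moebius_test_den_neq_0).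
  unfold moebius_test. fold w num den. rewrite Cmod_div by apply moebius_test_den_neq_0.
  apply Rdiv_le_1; auto. apply Cmod_le_Cnorm2. generalize moebius_test_gap Re_rot_le_pair_sum. nra.
Qed.

End MoebiusTest.

Lemma binomial_pos n j : (j <= n)%nat -> 0 < Binomial.C n j.
Proof.
  intros H. unfold Binomial.C. apply Rdiv_lt_0_compat. apply INR_fact_lt_0.
  apply Rmult_lt_0_compat; apply INR_fact_lt_0.
Qed.

Lemma in_Gt_pair_sum_lt n y q j : in_Gt n y q -> (1 <= j <= n - 1)%nat ->
  Cmod q < 1 /\ pair_sum (y j) (y (n - j)%nat) q < Binomial.C n j * (1 - Cmod q ^ 2).
Proof.
  intros [Hq [beta Hb]] Hj. split; [exact Hq |].
  destruct (Hb j Hj) as [E1 B1].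
  destruct (Hb (n - j)%nat ltac:(lia)) as [E2 _].
  replace (n - (n - j))%nat with j in E2 by lia.
  unfold pair_sum. rewrite E1, E2, !pair_defect_beta.
  rewrite !Cmod_mult, !Cmod_R, <- Cmod_sqr_Cnorm2, Rabs_pos_eq by (left; apply Cmod_lt_1_sqr; auto).
  assert (H := Cmod_lt_1_sqr q Hq). nra.
Qed.

Lemma Cmod_pair_defect_perturb (y1 y2 q y1' y2' q' : C) eps : 0 < eps <= 1 ->
  Cmod (y1 - y1') < eps -> Cmod (y2 - y2') < eps -> Cmod (q - q') < eps ->
  Cmod (pair_defect y1 y2 q) <= Cmod (pair_defect y1' y2' q') + eps * (2 + Cmod y2 + Cmod q).
Proof.
  intros He H1 H2 H3. unfold pair_defect.
  replace (y1 - Cconj y2 * q)%C with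
    ((y1' - Cconj y2' * q') + ((y1 - y1') - Cconj y2 * (q - q') - Cconj (y2 - y2') * q'))%C
    by (rewrite Cminus_conj; ring).
  eapply Rle_trans. apply Cmod_triangle. apply Rplus_le_compat_l.
  eapply Rle_trans. apply Cmod_minus_le. eapply Rle_trans. apply Rplus_le_compat_r. apply Cmod_minus_le.
  rewrite !Cmod_mult, !Cmod_conj.
  assert (Hq' : Cmod q' <= Cmod q + 1).
  { generalize (Cmod_reverse_triangle q' q). rewrite Cmod_minus_sym. lra. }
  generalize (Cmod_ge_0 y2) (Cmod_ge_0 q') (Cmod_ge_0 (y2 - y2')) (Cmod_ge_0 (q - q')). nra.
Qed.

Lemma Cmod_sqr_perturb (q q' : C) eps : Cmod (q - q') < eps ->
  Cmod q ^ 2 - Cmod q' ^ 2 <= eps * (2 * Cmod q + 1) + eps ^ 2.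
Proof.
  intros H. generalize (Cmod_reverse_triangle q q') (Cmod_reverse_triangle q' q) (Cmod_ge_0 q) (Cmod_ge_0 q').
  rewrite (Cmod_minus_sym q' q). intros. nra.
Qed.

Lemma in_Gammat_pair_sum_le n y q j : in_Gammat n y q -> (1 <= j <= n - 1)%nat ->
  Cmod q <= 1 /\ pair_sum (y j) (y (n - j)%nat) q <= Binomial.C n j * (1 - Cmod q ^ 2).
Proof.
  intros H Hj. set (c := Binomial.C n j). assert (Hc : 0 < c) by (apply binomial_pos; lia).
  split.
  - apply Rnot_lt_le. intro Hlt. destruct (H (Cmod q - 1)) as [y' [q' [[Hq' _] [Hqq _]]]]. lra.
    unfold in_disc in Hq'. generalize (Cmod_reverse_triangle q q'). lra.
  - cut (pair_sum (y j) (y (n - j)%nat) q - c * (1 - Cmod q ^ 2) <= 0). lra.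
    apply (Rle_0_of_le_small_mult _ ((2 + Cmod (y (n - j)%nat) + Cmod q) + (2 + Cmod (y j) + Cmod q)
                                     + c * (2 * Cmod q + 2))).
    intros eps Heps.
    destruct (H eps ltac:(lra)) as [y' [q' [Hg [Hqq Hyy]]]].
    destruct (in_Gt_pair_sum_lt n y' q' j Hg Hj) as [_ Hs]. fold c in Hs.
    assert (Y1 := Hyy j Hj). assert (Y2 := Hyy (n - j)%nat ltac:(lia)).
    generalize (Cmod_pair_defect_perturb _ _ _ _ _ _ eps Heps Y1 Y2 Hqq)
      (Cmod_pair_defect_perturb _ _ _ _ _ _ eps Heps Y2 Y1 Hqq) (Cmod_sqr_perturb q q' eps Hqq).
    unfold pair_sum in *. intros B1 B2 Hqd.
    assert (eps ^ 2 <= eps) by nra.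
    assert (c * (Cmod q ^ 2 - Cmod q' ^ 2) <= c * (eps * (2 * Cmod q + 2))) by (apply Rmult_le_compat_l; lra).
    nra.
Qed.

Lemma in_Gt_of_pair_sum_lt n y q : Cmod q < 1 ->
  (forall j, (1 <= j <= n - 1)%nat -> pair_sum (y j) (y (n - j)%nat) q < Binomial.C n j * (1 - Cmod q ^ 2)) ->
  in_Gt n y q.
Proof.
  intros Hq Hpair.
  assert (HD : 0 < 1 - Cnorm2 q) by (rewrite <- Cmod_sqr_Cnorm2; apply Cmod_lt_1_sqr; auto).
  split; [exact Hq |].
  exists (fun j => (pair_defect (y j) (y (n - j)%nat) q * RtoC (/ (1 - Cnorm2 q)))%C).
  intros j Hj. replace (n - (n - j))%nat with j by lia. split.
  - unfold pair_defect. destruct (y j), (y (n - j)%nat), q. unfold Cnorm2 in *.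
    apply injective_projections; simpl in *; field; lra.
  - specialize (Hpair j Hj). unfold pair_sum in Hpair. rewrite Cmod_sqr_Cnorm2 in Hpair.
    rewrite !Cmod_mult, !Cmod_R, Rabs_pos_eq by (left; apply Rinv_0_lt_compat; auto).
    apply Rmult_lt_reg_r with (1 - Cnorm2 q); auto. field_simplify; lra.
Qed.

Lemma pair_sum_lt_everywhere (c : R) (y1 y2 q : C -> C) l0 : 0 < c ->
  (forall w, Cmod w < 1 -> C_derivable_at y1 w) -> (forall w, Cmod w < 1 -> C_derivable_at y2 w) ->
  (forall w, Cmod w < 1 -> C_derivable_at q w) -> (forall w, Cmod w < 1 -> Cmod (q w) < 1) ->
  (forall w, Cmod w < 1 -> pair_sum (y1 w) (y2 w) (q w) <= c * (1 - Cmod (q w) ^ 2)) ->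
  Cmod l0 < 1 -> pair_sum (y1 l0) (y2 l0) (q l0) < c * (1 - Cmod (q l0) ^ 2) ->
  forall z, Cmod z < 1 -> pair_sum (y1 z) (y2 z) (q z) < c * (1 - Cmod (q z) ^ 2).
Proof.
  intros Hc Y1 Y2 Q Qs Hle Hl0 Hlt z Hz.
  destruct (exists_rotation_Re_eq_sum (pair_defect (y1 z) (y2 z) (q z)) (pair_defect (y2 z) (y1 z) (q z)))
    as [om [zz [Hom [Hzz Hrot]]]].
  set (g := fun w => moebius_test c (y1 w) (y2 w) (q w) zz om).
  assert (G_derivable : forall w, Cmod w < 1 -> C_derivable_at g w).
  { intros w Hw. unfold g, moebius_test, Cdiv.
    assert (W : C_derivable_at (fun w => y1 w + om * y2 w)%C w)
      by (apply C_derivable_at_plus, C_derivable_at_mult; auto using C_derivable_at_const).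
    apply C_derivable_at_mult.
    - apply C_derivable_at_minus; auto. apply C_derivable_at_mult; auto using C_derivable_at_const.
    - apply (C_derivable_at_Cinv (fun w => RtoC (2 * c) - zz * (y1 w + om * y2 w))%C).
      + apply C_derivable_at_minus, C_derivable_at_mult; auto using C_derivable_at_const.
      + apply (moebius_test_den_neq_0 c (y1 w) (y2 w) (q w) zz om); auto. }
  assert (Gz := Cmod_lt_1_of_Cmod_lt_1_at g G_derivable
    (fun w Hw => Cmod_moebius_test_le_1 c _ _ _ zz om Hc Hzz Hom (Qs w Hw) (Hle w Hw)) l0 Hl0
    (proj2 (Cmod_moebius_test_lt_1_iff c _ _ _ zz om Hc Hzz Hom (Qs l0 Hl0) (Hle l0 Hl0))
      (Rle_lt_trans _ _ _ (Re_rot_le_pair_sum _ _ _ zz om Hzz Hom) Hlt)) z Hz).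
  unfold g in Gz. rewrite Cmod_moebius_test_lt_1_iff in Gz by auto.
  unfold pair_sum. rewrite <- Hrot. exact Gz.
Qed.

Theorem mainTheorem11 (n : nat) (psi_y : nat -> C -> C) (psi_q : C -> C) :
  (2 <= n)%nat ->
  (forall j : nat, (1 <= j <= n - 1)%nat -> holo_on_disc (psi_y j)) ->
  holo_on_disc psi_q ->
  (forall z : C, in_disc z -> in_Gammat n (fun j => psi_y j z) (psi_q z)) ->
  (exists lambda0 : C, in_disc lambda0 /\
     in_Gt n (fun j => psi_y j lambda0) (psi_q lambda0)) ->
  forall z : C, in_disc z -> in_Gt n (fun j => psi_y j z) (psi_q z).
Proof.
  intros Hn Hy Hq Hcl [l0 [Hl0 Hint]] z Hz.
  assert (Q := holo_on_disc_C_derivable_at psi_q Hq).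
  assert (Qs : forall w, Cmod w < 1 -> Cmod (psi_q w) < 1).
  { apply (Cmod_lt_1_of_Cmod_lt_1_at psi_q Q) with l0; auto.
    - intros w Hw. apply (in_Gammat_pair_sum_le n _ _ 1 (Hcl w Hw)). lia.
    - apply Hint. }
  apply in_Gt_of_pair_sum_lt; [apply Qs, Hz |]. intros j Hj.
  apply (pair_sum_lt_everywhere (Binomial.C n j) (psi_y j) (psi_y (n - j)%nat) psi_q l0); auto.
  - apply binomial_pos. lia.
  - apply holo_on_disc_C_derivable_at, Hy, Hj.
  - apply holo_on_disc_C_derivable_at, Hy. lia.
  - intros w Hw. apply (in_Gammat_pair_sum_le n _ _ j (Hcl w Hw) Hj).
  - apply (in_Gt_pair_sum_lt n _ _ j Hint Hj).
Qed.
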